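(* There exists a PBD$(v,\{3,4\})$ of dimension three for every $v \in \{58,66,67,76\}$.
   Context: For a positive integer $v$ and $K \subseteq \{2,3,4,\dots\}$, a pairwise balanced design PBD$(v,K)$ is a pair $(X,\mathcal{B})$ where $X$ is a $v$-set of points and $\mathcal{B}$ is a family of subsets of $X$ (blocks), each of size in $K$, such that any two distinct points of $X$ lie together in exactly one block. A flat (subdesign) is a pair $(Y,\mathcal{B}_Y)$ with $Y \subseteq X$ and $\mathcal{B}_Y = \{B \in \mathcal{B} : B \subseteq Y\}$ such that any two distinct points of $Y$ lie together in exactly one block of $\mathcal{B}_Y$; it is proper if $Y \ne X$. The dimension of the PBD is the maximum integer $d$ such that every set of $d$ points is contained in a proper flat. *)

From mathcomp Require Import all_boot.
Set Implicit Arguments.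
Unset Strict Implicit.
Unset Printing Implicit Defensive.

Definition blocks_in (T : finType) (B : {set {set T}}) (K : pred nat) : Prop :=
  forall b, b \in B -> K #|b|.

Definition pairwise_balanced_on (T : finType) (B : {set {set T}}) (Y : {set T}) : Prop :=
  forall x y, x \in Y -> y \in Y -> x != y ->
    #|[set b in B | (b \subset Y) && (x \in b) && (y \in b)]| = 1.

(* PBD(v,K) on point set T (v = #|T|). *)
Definition is_PBD (T : finType) (K : pred nat) (B : {set {set T}}) : Prop :=
  blocks_in B K /\ pairwise_balanced_on B [set: T].

Definition is_flat (T : finType) (B : {set {set T}}) (Y : {set T}) : Prop :=
  pairwise_balanced_on B Y.

Definition is_proper_flat (T : finType) (B : {set {set T}}) (Y : {set T}) : Prop :=
  is_flat B Y /\ Y != [set: T].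

Definition every_dset_in_proper_flat (T : finType) (B : {set {set T}}) (d : nat) : Prop :=
  forall S : {set T}, #|S| = d -> exists Y, is_proper_flat B Y /\ S \subset Y.

(* The dimension of the design is d: the maximum d (among d <= v, since for
   d > v the condition holds vacuously) such that every d-set of points lies
   in a proper flat. *)
Definition has_dimension (T : finType) (B : {set {set T}}) (d : nat) : Prop :=
  every_dset_in_proper_flat B d /\
  forall d', d' <= #|T| -> every_dset_in_proper_flat B d' -> d' <= d.

Definition K34 : pred nat := fun k => (k == 3) || (k == 4).

From mathcomp Require Import all_boot.
Set Implicit Arguments.
Unset Strict Implicit.
Unset Printing Implicit Defensive.

(* The designs are given explicitly, so the proof is a verified certificate
   check.  In a linear space (every pair of points in exactly one block) the
   flats are exactly the block-closed sets: those containing every block they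
   meet in two points.  Hence the dimension is three as soon as
   - every 3-set lies in one of finitely many listed proper block-closed sets,
   - some 4-set spans, i.e. its iterated block-closure is the whole point set,
   because any set of at least four points can be enlarged to contain the
   spanning 4-set. *)

Section LinearSpaces.
Variables (T : finType) (B : {set {set T}}).

Definition block_closed (Y : {set T}) : Prop :=
  forall b x y, b \in B -> x != y -> x \in b -> y \in b -> x \in Y -> y \in Y ->
    b \subset Y.

Hypothesis linB : pairwise_balanced_on B [set: T].

Lemma block_unique b1 b2 x y : b1 \in B -> b2 \in B -> x != y ->
  x \in b1 -> y \in b1 -> x \in b2 -> y \in b2 -> b1 = b2.
Proof.
move=> b1B b2B nxy xb1 yb1 xb2 yb2.
have /eqP/cards1P[b0 def_b0] := linB (in_setT x) (in_setT y) nxy.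
have is_b0 b : b \in B -> x \in b -> y \in b -> b = b0.
  by move=> bB xb yb; apply/set1P; rewrite -def_b0 !inE bB subsetT xb yb.
by rewrite (is_b0 b1) // (is_b0 b2).
Qed.

Lemma flat_block_closed Y : is_flat B Y -> block_closed Y.
Proof.
move=> flatY b x y bB nxy xb yb xY yY.
have /eqP/cards1P[b0 def_b0] := flatY x y xY yY nxy.
have : b0 \in [set b in B | (b \subset Y) && (x \in b) && (y \in b)].
  by rewrite def_b0 set11.
rewrite inE => /and3P[b0B /andP[b0Y xb0] yb0].
by rewrite (block_unique bB b0B nxy).
Qed.

Lemma block_closed_flat Y : block_closed Y -> is_flat B Y.
Proof.
move=> closedY x y xY yY nxy; rewrite -(linB (in_setT x) (in_setT y) nxy).
apply: eq_card => b; rewrite !inE subsetT /=.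
apply/idP/idP => [/and3P[-> /andP[_ ->] ->] // | /and3P[bB xb yb]].
by rewrite bB xb yb (closedY b x y).
Qed.

End LinearSpaces.

Section Dimension.
Variables (T : finType) (B : {set {set T}}).

Definition spanning (S : {set T}) : Prop :=
  forall Y, is_flat B Y -> S \subset Y -> Y = [set: T].

Lemma superset_of_card (A : {set T}) n :
  #|A| <= n <= #|T| -> exists2 S : {set T}, A \subset S & #|S| = n.
Proof.
elim: n => [|n IHn].
  by rewrite leqn0 => /andP[/eqP/cards0_eq-> _]; exists set0; rewrite ?cards0.
rewrite leq_eqVlt => /andP[/orP[/eqP <-|An] nT]; first by exists A.
have [|S AS Sn] := IHn; first by rewrite -ltnS An (ltnW nT).
have /subsetPn[x _ xS] : ~~ ([set: T] \subset S).
  by apply: contraL nT => /subset_leq_card; rewrite cardsT Sn -ltnNge.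
by exists (x |: S); [apply: subset_trans (subsetUr _ _) | rewrite cardsU1 xS Sn].
Qed.

(* The dimension is d as soon as every d-set lies in a proper flat and some
   (d+1)-set spans: any larger set contains such a spanning set. *)
Lemma has_dimension_of_spanning d (S : {set T}) :
  every_dset_in_proper_flat B d -> #|S| = d.+1 -> spanning S -> has_dimension B d.
Proof.
move=> dflat cardS spanS; split=> // n nT nflat; rewrite leqNgt; apply/negP => dn.
have [|S' SS' cardS'] := @superset_of_card S n; first by rewrite cardS dn nT.
have [Y [[flatY properY] S'Y]] := nflat S' cardS'.
by move: properY; rewrite (spanS Y flatY (subset_trans SS' S'Y)) eqxx.
Qed.

End Dimension.

Lemma two_le_count (T : eqType) (s : seq T) (P : pred T) x y :
  x != y -> x \in s -> y \in s -> P x -> P y -> 1 < count P s.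
Proof.
move=> nxy xs ys Px Py; rewrite -size_filter.
apply: (@uniq_leq_size _ [:: x; y]); first by rewrite /= inE nxy.
by apply/allP; rewrite /= !mem_filter Px Py xs ys.
Qed.

Lemma count_two (T : eqType) (s : seq T) (P : pred T) : uniq s -> 1 < count P s ->
  exists x y, [/\ x != y, x \in s, y \in s, P x & P y].
Proof.
move=> us; rewrite -size_filter.
have : uniq (filter P s) by rewrite filter_uniq.
have inPs z : z \in filter P s -> (z \in s) && P z by rewrite mem_filter andbC.
move: inPs; case: (filter P s) => [|x [|y r]] //= inPs /andP[].
rewrite inE negb_or => /andP[nxy _] _ _.
have /andP[xs Px] := inPs x (mem_head _ _).
have /andP[ys Py] : (y \in s) && P y by apply: inPs; rewrite !inE eqxx orbT.
by exists x, y.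
Qed.

Lemma flatten_map_uniq_mem (T S : eqType) (f : T -> seq S) s a b y :
  uniq (flatten (map f s)) -> a \in s -> b \in s -> y \in f a -> y \in f b -> a = b.
Proof.
elim: s => //= c s IHs; rewrite cat_uniq => /and3P[_ disj us].
have notc d : d \in s -> y \in f d -> y \in f c -> False.
  move=> ds yd yc; case/negP: disj; apply/hasP; exists y => //.
  by apply/flattenP; exists (f d); rewrite ?map_f.
rewrite !inE => /predU1P[-> | a_s] /predU1P[-> | b_s] ya yb //.
- by case: (notc b b_s yb ya).
- by case: (notc a a_s ya yb).
- exact: IHs.
Qed.

Section ListCertificates.
Variables (v : nat) (bl : seq (seq nat)).

Definition pts (s : seq nat) : {set 'I_v} := [set i : 'I_v | val i \in s].

Lemma in_pts s (i : 'I_v) : (i \in pts s) = (val i \in s).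
Proof. by rewrite inE. Qed.

Lemma card_pts s : uniq s -> all (fun x => x < v) s -> #|pts s| = size s.
Proof.
move=> us s_v; have -> : pts s = [set i in pmap insub s].
  by apply/setP => i; rewrite !inE mem_pmap_sub.
rewrite cardsE (card_uniqP _) ?pmap_sub_uniq // size_pmap_sub.
by rewrite (eq_in_count (a2 := predT)) ?count_predT // => x /(allP s_v).
Qed.

Definition design : {set {set 'I_v}} := [set:: map pts bl].

Lemma in_design X : reflect (exists2 b, b \in bl & X = pts b) (X \in design).
Proof. by rewrite inE; apply: (iffP mapP). Qed.

Definition blocks_ok : bool :=
  all (fun b => [&& uniq b, all (fun x => x < v) b & K34 (size b)]) bl.

Definition neighbours (x : nat) : seq nat :=
  flatten [seq rem x b | b <- bl & x \in b].

(* Every point other than x is a neighbour of x exactly once. *)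
Definition pairs_ok : bool :=
  all (fun x => let N := neighbours x in
    uniq N && all (fun y => (x == y) || (y \in N)) (iota 0 v)) (iota 0 v).

Hypothesis blocksP : blocks_ok.

Lemma block_ok b : b \in bl -> [/\ uniq b, all (fun x => x < v) b & K34 (size b)].
Proof. by move=> b_bl; have /and3P[] := allP blocksP b b_bl. Qed.

Lemma design_blocks : blocks_in design K34.
Proof.
move=> X /in_design[b b_bl ->]; have [ub b_v Kb] := block_ok b_bl.
by rewrite card_pts.
Qed.

Hypothesis pairsP : pairs_ok.

Lemma neighbours_ok x : x < v ->
  uniq (neighbours x) /\ forall y, y < v -> x != y -> y \in neighbours x.
Proof.
move=> xv; have := allP pairsP x; rewrite mem_iota add0n /= => /(_ xv) /andP[un cover].
split=> // y yv nxy; have := allP cover y; rewrite mem_iota add0n /= => /(_ yv).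
by rewrite (negbTE nxy).
Qed.

Lemma list_block_unique b1 b2 x y : b1 \in bl -> b2 \in bl -> x < v -> x != y ->
  x \in b1 -> y \in b1 -> x \in b2 -> y \in b2 -> b1 = b2.
Proof.
move=> b1_bl b2_bl xv nxy xb1 yb1 xb2 yb2.
have [un _] := neighbours_ok xv.
have [[ub1 _ _] [ub2 _ _]] := (block_ok b1_bl, block_ok b2_bl).
have nyx : y != x by rewrite eq_sym.
apply: (flatten_map_uniq_mem (f := rem x) (y := y) un).
- by rewrite mem_filter xb1.
- by rewrite mem_filter xb2.
- by rewrite (mem_rem_uniq _ ub1) inE nyx.
- by rewrite (mem_rem_uniq _ ub2) inE nyx.
Qed.

Lemma list_block_exists (x y : 'I_v) : x != y ->
  exists2 b, b \in bl & (val x \in b) && (val y \in b).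
Proof.
move=> nxy; have [_ /(_ (val y) (ltn_ord y) nxy)] := neighbours_ok (ltn_ord x).
case/flattenP=> r /mapP[b]; rewrite mem_filter => /andP[xb b_bl] -> yr.
by exists b; rewrite // xb (mem_rem yr).
Qed.

Lemma design_linear : pairwise_balanced_on design [set: 'I_v].
Proof.
move=> x y _ _ nxy; have [b b_bl /andP[xb yb]] := list_block_exists nxy.
apply/eqP/cards1P; exists (pts b); apply/setP => X; rewrite in_set in_set1 subsetT /=.
apply/idP/eqP => [/and3P[/in_design[b' b'_bl ->] xb' yb'] | ->].
  by rewrite !in_pts in xb' yb'; rewrite (list_block_unique b'_bl b_bl (ltn_ord x) nxy).
by rewrite !in_pts xb yb !andbT; apply/in_design; exists b.
Qed.

Definition charvec (s : seq nat) : seq bool := [seq z \in s | z <- iota 0 v].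

Definition vecset (f : seq bool) : {set 'I_v} := [set i : 'I_v | nth false f i].

Lemma vecset_charvec s : vecset (charvec s) = pts s.
Proof. by apply/setP => i; rewrite !inE (nth_map 0) ?size_iota // nth_iota. Qed.

Definition closed_vec (f : seq bool) : bool :=
  all (fun b => (count (nth false f) b <= 1) || all (nth false f) b) bl.

Definition proper_vec (f : seq bool) : bool := ~~ all (nth false f) (iota 0 v).

Lemma closed_vec_sound f : closed_vec f -> block_closed design (vecset f).
Proof.
move=> closedf X x y /in_design[b b_bl ->] nxy; rewrite !in_pts !inE => xb yb xf yf.
have /orP[|in_f] := allP closedf b b_bl.
  by rewrite leqNgt (@two_le_count _ _ _ (val x) (val y)).
by apply/subsetP => i; rewrite in_pts inE => /(allP in_f).
Qed.

Lemma proper_vec_sound f : proper_vec f -> vecset f != [set: 'I_v].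
Proof.
apply: contra => /eqP full; apply/allP => z; rewrite mem_iota add0n /= => zv.
by have := in_setT (Ordinal zv); rewrite -full inE.
Qed.

Fixpoint orv (f g : seq bool) : seq bool :=
  match f, g with
  | a :: f', b :: g' => (a || b) :: orv f' g'
  | [::], _ => g
  | _, [::] => f
  end.

Lemma nth_foldr_orv (F : seq (seq bool)) z :
  nth false (foldr orv [::] F) z = has (fun f => nth false f z) F.
Proof.
have nth_orv f g : nth false (orv f g) z = nth false f z || nth false g z.
  by elim: f g z => [|a f IHf] [|b g] [|z'] //=; rewrite ?orbF.
by elim: F => [|f F IHF] /=; rewrite ?nth_nil // nth_orv IHF.
Qed.

Definition triples_covered (fb : seq (seq bool)) : bool :=
  all (fun x => let Fx := [seq f <- fb | nth false f x] in
    all (fun y => (x == y) ||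
      let U := foldr orv [::] [seq f <- Fx | nth false f y] in
      all (nth false U) (iota 0 v)) (iota 0 v))
    (iota 0 v).

Lemma triples_coveredP fb x y z : triples_covered fb -> x < v -> y < v -> z < v ->
  x != y -> exists2 f, f \in fb & [&& nth false f x, nth false f y & nth false f z].
Proof.
move=> covered xv yv zv nxy.
have := allP covered x; rewrite mem_iota add0n /= => /(_ xv) /allP /(_ y).
rewrite mem_iota add0n /= (negbTE nxy) => /(_ yv) /allP /(_ z).
rewrite mem_iota add0n /= nth_foldr_orv => /(_ zv) /hasP[f].
by rewrite !mem_filter => /and3P[fy fx f_fb] fz; exists f; rewrite ?fx ?fy.
Qed.

Lemma triples_sound fb : all (fun f => closed_vec f && proper_vec f) fb ->
  triples_covered fb -> every_dset_in_proper_flat design 3.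
Proof.
move=> flatsP covered S; move: (enum_uniq S) (mem_enum S); rewrite cardE.
case: (enum S) => [|x [|y [|z [|w r]]]] //= uS enumS _.
move: uS; rewrite !inE !negb_or => /and3P[/andP[nxy _] _ _].
have [f f_fb /and3P[fx fy fz]] :=
  triples_coveredP covered (ltn_ord x) (ltn_ord y) (ltn_ord z) nxy.
have /andP[closedf properf] := allP flatsP f f_fb.
exists (vecset f); split.
  by split; [apply: block_closed_flat design_linear _ (closed_vec_sound closedf) |
             exact: proper_vec_sound].
by apply/subsetP => i; rewrite -enumS !inE => /or3P[] /eqP ->.
Qed.

Definition close_step (c : seq bool) : seq bool :=
  let full := [seq b <- bl | 1 < count (nth false c) b] in
  [seq nth false c z || has (fun b : seq nat => z \in b) full | z <- iota 0 v].

Lemma close_step_sound (Y : {set 'I_v}) c : block_closed design Y ->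
  vecset c \subset Y -> vecset (close_step c) \subset Y.
Proof.
move=> closedY cY; apply/subsetP => i.
rewrite inE (nth_map 0) ?size_iota // nth_iota // add0n.
case/orP=> [ci | /hasP[b]]; first by apply: (subsetP cY); rewrite inE.
rewrite mem_filter => /andP[two b_bl] ib.
have [ub b_v _] := block_ok b_bl.
have [x [y [nxy xb yb cx cy]]] := count_two ub two.
have [xv yv] := (allP b_v x xb, allP b_v y yb).
have bY : pts b \subset Y.
  apply: (closedY _ (Ordinal xv) (Ordinal yv)); rewrite ?in_pts //.
  - by apply/in_design; exists b.
  - by apply: (subsetP cY); rewrite inE.
  - by apply: (subsetP cY); rewrite inE.
by apply: (subsetP bY); rewrite in_pts.
Qed.

Lemma iter_close_step_sound (Y : {set 'I_v}) c k : block_closed design Y ->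
  vecset c \subset Y -> vecset (iter k close_step c) \subset Y.
Proof. by move=> closedY cY; elim: k => //= k; apply: close_step_sound. Qed.

Definition spans_in (s0 : seq nat) (k : nat) : bool :=
  [&& uniq s0, size s0 == 4, all (fun x => x < v) s0 &
      all (nth false (iter k close_step (charvec s0))) (iota 0 v)].

Lemma spans_sound s0 k : spans_in s0 k -> #|pts s0| = 4 /\ spanning design (pts s0).
Proof.
case/and4P=> us0 /eqP size4 s0_v full; split; first by rewrite card_pts.
move=> Y flatY s0Y; apply/eqP; rewrite eqEsubset subsetT /=.
have closedY := flat_block_closed design_linear flatY.
have s0vY : vecset (charvec s0) \subset Y by rewrite vecset_charvec.
apply: subset_trans _ (iter_close_step_sound k closedY s0vY).
by apply/subsetP => i _; rewrite inE (allP full) // mem_iota add0n /=.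
Qed.

End ListCertificates.

Definition certificate v bl (fl : seq (seq nat)) s0 k : bool :=
  let fb := map (charvec v) fl in
  [&& blocks_ok v bl, pairs_ok v bl,
      all (fun f => closed_vec bl f && proper_vec v f) fb,
      triples_covered v fb & spans_in v bl s0 k].

Lemma certificate_sound v bl fl s0 k : certificate v bl fl s0 k ->
  exists B : {set {set 'I_v}}, is_PBD K34 B /\ has_dimension B 3.
Proof.
case/and5P=> blocksP pairsP flatsP covered spans.
have [card4 spanning] := spans_sound blocksP pairsP spans.
exists (design v bl); split; first by split; [exact: design_blocks | exact: design_linear].
have every3 := triples_sound blocksP pairsP flatsP covered.
exact: has_dimension_of_spanning every3 card4 spanning.
Qed.

Definition blocks58 : seq (seq nat) := [:: [:: 0; 1; 57];
 [:: 2; 3; 57];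
 [:: 4; 5; 57];
 [:: 6; 7; 57];
 [:: 8; 9; 57];
 [:: 10; 11; 57];
 [:: 12; 13; 57];
 [:: 14; 15; 57];
 [:: 16; 17; 57];
 [:: 18; 19; 20; 57];
 [:: 21; 22; 57];
 [:: 23; 24; 57];
 [:: 25; 26; 57];
 [:: 27; 28; 57];
 [:: 29; 30; 57];
 [:: 31; 32; 57];
 [:: 33; 34; 57];
 [:: 35; 36; 57];
 [:: 37; 38; 57];
 [:: 39; 40; 57];
 [:: 41; 42; 57];
 [:: 43; 44; 57];
 [:: 45; 46; 57];
 [:: 47; 48; 57];
 [:: 49; 50; 57];
 [:: 51; 52; 57];
 [:: 53; 54; 57];
 [:: 55; 56; 57];
 [:: 2; 8; 16];
 [:: 3; 8; 17];
 [:: 3; 9; 16];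
 [:: 2; 9; 17];
 [:: 21; 41; 49];
 [:: 22; 41; 50];
 [:: 22; 42; 49];
 [:: 21; 42; 50];
 [:: 6; 43; 55];
 [:: 7; 43; 56];
 [:: 7; 44; 55];
 [:: 6; 44; 56];
 [:: 14; 25; 55];
 [:: 15; 25; 56];
 [:: 15; 26; 55];
 [:: 14; 26; 56];
 [:: 8; 41; 53];
 [:: 9; 41; 54];
 [:: 9; 42; 53];
 [:: 8; 42; 54];
 [:: 4; 33; 41];
 [:: 5; 33; 42];
 [:: 5; 34; 41];
 [:: 4; 34; 42];
 [:: 0; 49; 51];
 [:: 1; 49; 52];
 [:: 1; 50; 51];
 [:: 0; 50; 52];
 [:: 12; 23; 37];
 [:: 13; 23; 38];
 [:: 13; 24; 37];
 [:: 12; 24; 38];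
 [:: 8; 36; 19];
 [:: 35; 47; 19];
 [:: 8; 47; 18];
 [:: 9; 36; 47; 20];
 [:: 8; 35; 48; 20];
 [:: 9; 48; 19];
 [:: 9; 35; 18];
 [:: 36; 48; 18];
 [:: 0; 37; 39];
 [:: 1; 37; 40];
 [:: 1; 38; 39];
 [:: 0; 38; 40];
 [:: 23; 25; 31];
 [:: 24; 25; 32];
 [:: 24; 26; 31];
 [:: 23; 26; 32];
 [:: 16; 33; 55];
 [:: 17; 33; 56];
 [:: 17; 34; 55];
 [:: 16; 34; 56];
 [:: 31; 33; 51];
 [:: 32; 33; 52];
 [:: 32; 34; 51];
 [:: 31; 34; 52];
 [:: 6; 39; 49];
 [:: 7; 39; 50];
 [:: 7; 40; 49];
 [:: 6; 40; 50];
 [:: 8; 23; 45];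
 [:: 9; 23; 46];
 [:: 9; 24; 45];
 [:: 8; 24; 46];
 [:: 16; 39; 45];
 [:: 17; 39; 46];
 [:: 17; 40; 45];
 [:: 16; 40; 46];
 [:: 4; 23; 29];
 [:: 5; 23; 30];
 [:: 5; 24; 29];
 [:: 4; 24; 30];
 [:: 2; 33; 37];
 [:: 3; 33; 38];
 [:: 3; 34; 37];
 [:: 2; 34; 38];
 [:: 4; 47; 55];
 [:: 5; 47; 56];
 [:: 5; 48; 55];
 [:: 4; 48; 56];
 [:: 33; 39; 43];
 [:: 34; 39; 44];
 [:: 34; 40; 43];
 [:: 33; 40; 44];
 [:: 12; 43; 45];
 [:: 13; 43; 46];
 [:: 13; 44; 45];
 [:: 12; 44; 46];
 [:: 8; 31; 55];
 [:: 9; 31; 56];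
 [:: 9; 32; 55];
 [:: 8; 32; 56];
 [:: 12; 21; 53];
 [:: 13; 21; 54];
 [:: 13; 22; 53];
 [:: 12; 22; 54];
 [:: 16; 27; 53];
 [:: 17; 27; 54];
 [:: 17; 28; 53];
 [:: 16; 28; 54];
 [:: 10; 21; 39];
 [:: 11; 21; 40];
 [:: 11; 22; 39];
 [:: 10; 22; 40];
 [:: 8; 27; 39];
 [:: 9; 27; 40];
 [:: 9; 28; 39];
 [:: 8; 28; 40];
 [:: 12; 33; 49];
 [:: 13; 33; 50];
 [:: 13; 34; 49];
 [:: 12; 34; 50];
 [:: 23; 39; 53];
 [:: 24; 39; 54];
 [:: 24; 40; 53];
 [:: 23; 40; 54];
 [:: 29; 35; 49];
 [:: 30; 35; 50];
 [:: 30; 36; 49];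
 [:: 29; 36; 50];
 [:: 4; 21; 25];
 [:: 5; 21; 26];
 [:: 5; 22; 25];
 [:: 4; 22; 26];
 [:: 2; 47; 49];
 [:: 3; 47; 50];
 [:: 3; 48; 49];
 [:: 2; 48; 50];
 [:: 10; 38; 19];
 [:: 37; 53; 19];
 [:: 10; 53; 18];
 [:: 11; 38; 53; 20];
 [:: 10; 37; 54; 20];
 [:: 11; 54; 19];
 [:: 11; 37; 18];
 [:: 38; 54; 18];
 [:: 14; 31; 45];
 [:: 15; 31; 46];
 [:: 15; 32; 45];
 [:: 14; 32; 46];
 [:: 0; 45; 47];
 [:: 1; 45; 48];
 [:: 1; 46; 47];
 [:: 0; 46; 48];
 [:: 35; 37; 41];
 [:: 36; 37; 42];
 [:: 36; 38; 41];
 [:: 35; 38; 42];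
 [:: 8; 37; 51];
 [:: 9; 37; 52];
 [:: 9; 38; 51];
 [:: 8; 38; 52];
 [:: 0; 29; 31];
 [:: 1; 29; 32];
 [:: 1; 30; 31];
 [:: 0; 30; 32];
 [:: 12; 25; 41];
 [:: 13; 25; 42];
 [:: 13; 26; 41];
 [:: 12; 26; 42];
 [:: 10; 23; 55];
 [:: 11; 23; 56];
 [:: 11; 24; 55];
 [:: 10; 24; 56];
 [:: 0; 10; 12];
 [:: 1; 10; 13];
 [:: 1; 11; 12];
 [:: 0; 11; 13];
 [:: 2; 12; 14];
 [:: 3; 12; 15];
 [:: 3; 13; 14];
 [:: 2; 13; 15];
 [:: 47; 51; 53];
 [:: 48; 51; 54];
 [:: 48; 52; 53];
 [:: 47; 52; 54];
 [:: 14; 29; 39];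
 [:: 15; 29; 40];
 [:: 15; 30; 39];
 [:: 14; 30; 40];
 [:: 4; 37; 43];
 [:: 5; 37; 44];
 [:: 5; 38; 43];
 [:: 4; 38; 44];
 [:: 23; 33; 47];
 [:: 24; 33; 48];
 [:: 24; 34; 47];
 [:: 23; 34; 48];
 [:: 4; 45; 51];
 [:: 5; 45; 52];
 [:: 5; 46; 51];
 [:: 4; 46; 52];
 [:: 27; 41; 45];
 [:: 28; 41; 46];
 [:: 28; 42; 45];
 [:: 27; 42; 46];
 [:: 16; 25; 35];
 [:: 17; 25; 36];
 [:: 17; 26; 35];
 [:: 16; 26; 36];
 [:: 14; 42; 19];
 [:: 41; 51; 19];
 [:: 14; 51; 18];
 [:: 15; 42; 51; 20];
 [:: 14; 41; 52; 20];
 [:: 15; 52; 19];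
 [:: 15; 41; 18];
 [:: 42; 52; 18];
 [:: 31; 43; 53];
 [:: 32; 43; 54];
 [:: 32; 44; 53];
 [:: 31; 44; 54];
 [:: 2; 23; 27];
 [:: 3; 23; 28];
 [:: 3; 24; 27];
 [:: 2; 24; 28];
 [:: 16; 31; 37];
 [:: 17; 31; 38];
 [:: 17; 32; 37];
 [:: 16; 32; 38];
 [:: 6; 12; 16];
 [:: 7; 12; 17];
 [:: 7; 13; 16];
 [:: 6; 13; 17];
 [:: 2; 45; 53];
 [:: 3; 45; 54];
 [:: 3; 46; 53];
 [:: 2; 46; 54];
 [:: 2; 35; 43];
 [:: 3; 35; 44];
 [:: 3; 36; 43];
 [:: 2; 36; 44];
 [:: 23; 43; 51];
 [:: 24; 43; 52];
 [:: 24; 44; 51];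
 [:: 23; 44; 52];
 [:: 0; 2; 4];
 [:: 1; 2; 5];
 [:: 1; 3; 4];
 [:: 0; 3; 5];
 [:: 0; 14; 16];
 [:: 1; 14; 17];
 [:: 1; 15; 16];
 [:: 0; 15; 17];
 [:: 21; 37; 55];
 [:: 22; 37; 56];
 [:: 22; 38; 55];
 [:: 21; 38; 56];
 [:: 8; 29; 43];
 [:: 9; 29; 44];
 [:: 9; 30; 43];
 [:: 8; 30; 44];
 [:: 14; 27; 33];
 [:: 15; 27; 34];
 [:: 15; 28; 33];
 [:: 14; 28; 34];
 [:: 29; 41; 55];
 [:: 30; 41; 56];
 [:: 30; 42; 55];
 [:: 29; 42; 56];
 [:: 16; 23; 41];
 [:: 17; 23; 42];
 [:: 17; 24; 41];
 [:: 16; 24; 42];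
 [:: 2; 51; 55];
 [:: 3; 51; 56];
 [:: 3; 52; 55];
 [:: 2; 52; 56];
 [:: 4; 8; 12];
 [:: 5; 8; 13];
 [:: 5; 9; 12];
 [:: 4; 9; 13];
 [:: 4; 6; 14];
 [:: 5; 6; 15];
 [:: 5; 7; 14];
 [:: 4; 7; 15];
 [:: 8; 25; 49];
 [:: 9; 25; 50];
 [:: 9; 26; 49];
 [:: 8; 26; 50];
 [:: 6; 23; 35];
 [:: 7; 23; 36];
 [:: 7; 24; 35];
 [:: 6; 24; 36];
 [:: 45; 49; 55];
 [:: 46; 49; 56];
 [:: 46; 50; 55];
 [:: 45; 50; 56];
 [:: 10; 31; 49];
 [:: 11; 31; 50];
 [:: 11; 32; 49];
 [:: 10; 32; 50];
 [:: 21; 35; 45];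
 [:: 22; 35; 46];
 [:: 22; 36; 45];
 [:: 21; 36; 46];
 [:: 12; 29; 51];
 [:: 13; 29; 52];
 [:: 13; 30; 51];
 [:: 12; 30; 52];
 [:: 31; 39; 47];
 [:: 32; 39; 48];
 [:: 32; 40; 47];
 [:: 31; 40; 48];
 [:: 10; 25; 45];
 [:: 11; 25; 46];
 [:: 11; 26; 45];
 [:: 10; 26; 46];
 [:: 14; 23; 49];
 [:: 15; 23; 50];
 [:: 15; 24; 49];
 [:: 14; 24; 50];
 [:: 12; 31; 35];
 [:: 13; 31; 36];
 [:: 13; 32; 35];
 [:: 12; 32; 36];
 [:: 21; 27; 29];
 [:: 22; 27; 30];
 [:: 22; 28; 29];
 [:: 21; 28; 30];
 [:: 16; 21; 51];
 [:: 17; 21; 52];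
 [:: 17; 22; 51];
 [:: 16; 22; 52];
 [:: 8; 21; 33];
 [:: 9; 21; 34];
 [:: 9; 22; 33];
 [:: 8; 22; 34];
 [:: 10; 29; 33];
 [:: 11; 29; 34];
 [:: 11; 30; 33];
 [:: 10; 30; 34];
 [:: 2; 6; 10];
 [:: 3; 6; 11];
 [:: 3; 7; 10];
 [:: 2; 7; 11];
 [:: 12; 27; 47];
 [:: 13; 27; 48];
 [:: 13; 28; 47];
 [:: 12; 28; 48];
 [:: 25; 33; 53];
 [:: 26; 33; 54];
 [:: 26; 34; 53];
 [:: 25; 34; 54];
 [:: 0; 22; 19];
 [:: 21; 23; 19];
 [:: 0; 23; 18];
 [:: 1; 22; 23; 20];
 [:: 0; 21; 24; 20];
 [:: 1; 24; 19];
 [:: 1; 21; 18];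
 [:: 22; 24; 18];
 [:: 14; 21; 43];
 [:: 15; 21; 44];
 [:: 15; 22; 43];
 [:: 14; 22; 44];
 [:: 10; 35; 51];
 [:: 11; 35; 52];
 [:: 11; 36; 51];
 [:: 10; 36; 52];
 [:: 16; 44; 19];
 [:: 43; 49; 19];
 [:: 16; 49; 18];
 [:: 17; 44; 49; 20];
 [:: 16; 43; 50; 20];
 [:: 17; 50; 19];
 [:: 17; 43; 18];
 [:: 44; 50; 18];
 [:: 10; 27; 43];
 [:: 11; 27; 44];
 [:: 11; 28; 43];
 [:: 10; 28; 44];
 [:: 6; 25; 37];
 [:: 7; 25; 38];
 [:: 7; 26; 37];
 [:: 6; 26; 38];
 [:: 6; 27; 51];
 [:: 7; 27; 52];
 [:: 7; 28; 51];
 [:: 6; 28; 52];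
 [:: 6; 29; 53];
 [:: 7; 29; 54];
 [:: 7; 30; 53];
 [:: 6; 30; 54];
 [:: 6; 31; 41];
 [:: 7; 31; 42];
 [:: 7; 32; 41];
 [:: 6; 32; 42];
 [:: 0; 6; 8];
 [:: 1; 6; 9];
 [:: 1; 7; 8];
 [:: 0; 7; 9];
 [:: 2; 26; 19];
 [:: 25; 29; 19];
 [:: 2; 29; 18];
 [:: 3; 26; 29; 20];
 [:: 2; 25; 30; 20];
 [:: 3; 30; 19];
 [:: 3; 25; 18];
 [:: 26; 30; 18];
 [:: 2; 39; 41];
 [:: 3; 39; 42];
 [:: 3; 40; 41];
 [:: 2; 40; 42];
 [:: 25; 43; 47];
 [:: 26; 43; 48];
 [:: 26; 44; 47];
 [:: 25; 44; 48];
 [:: 4; 49; 53];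
 [:: 5; 49; 54];
 [:: 5; 50; 53];
 [:: 4; 50; 54];
 [:: 12; 40; 19];
 [:: 39; 55; 19];
 [:: 12; 55; 18];
 [:: 13; 40; 55; 20];
 [:: 12; 39; 56; 20];
 [:: 13; 56; 19];
 [:: 13; 39; 18];
 [:: 40; 56; 18];
 [:: 10; 41; 47];
 [:: 11; 41; 48];
 [:: 11; 42; 47];
 [:: 10; 42; 48];
 [:: 0; 53; 55];
 [:: 1; 53; 56];
 [:: 1; 54; 55];
 [:: 0; 54; 56];
 [:: 27; 37; 49];
 [:: 28; 37; 50];
 [:: 28; 38; 49];
 [:: 27; 38; 50];
 [:: 6; 21; 47];
 [:: 7; 21; 48];
 [:: 7; 22; 47];
 [:: 6; 22; 48];
 [:: 0; 25; 27];
 [:: 1; 25; 28];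
 [:: 1; 26; 27];
 [:: 0; 26; 28];
 [:: 16; 29; 47];
 [:: 17; 29; 48];
 [:: 17; 30; 47];
 [:: 16; 30; 48];
 [:: 14; 37; 47];
 [:: 15; 37; 48];
 [:: 15; 38; 47];
 [:: 14; 38; 48];
 [:: 2; 21; 31];
 [:: 3; 21; 32];
 [:: 3; 22; 31];
 [:: 2; 22; 32];
 [:: 4; 10; 16];
 [:: 5; 10; 17];
 [:: 5; 11; 16];
 [:: 4; 11; 17];
 [:: 8; 10; 14];
 [:: 9; 10; 15];
 [:: 9; 11; 14];
 [:: 8; 11; 15];
 [:: 14; 35; 53];
 [:: 15; 35; 54];
 [:: 15; 36; 53];
 [:: 14; 36; 54];
 [:: 0; 33; 35];
 [:: 1; 33; 36];
 [:: 1; 34; 35];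
 [:: 0; 34; 36];
 [:: 27; 35; 55];
 [:: 28; 35; 56];
 [:: 28; 36; 55];
 [:: 27; 36; 56];
 [:: 4; 28; 19];
 [:: 27; 31; 19];
 [:: 4; 31; 18];
 [:: 5; 28; 31; 20];
 [:: 4; 27; 32; 20];
 [:: 5; 32; 19];
 [:: 5; 27; 18];
 [:: 28; 32; 18];
 [:: 6; 34; 19];
 [:: 33; 45; 19];
 [:: 6; 45; 18];
 [:: 7; 34; 45; 20];
 [:: 6; 33; 46; 20];
 [:: 7; 46; 19];
 [:: 7; 33; 18];
 [:: 34; 46; 18];
 [:: 29; 37; 45];
 [:: 30; 37; 46];
 [:: 30; 38; 45];
 [:: 29; 38; 46];
 [:: 0; 41; 43];
 [:: 1; 41; 44];
 [:: 1; 42; 43];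
 [:: 0; 42; 44];
 [:: 4; 35; 39];
 [:: 5; 35; 40];
 [:: 5; 36; 39];
 [:: 4; 36; 40];
 [:: 25; 39; 51];
 [:: 26; 39; 52];
 [:: 26; 40; 51];
 [:: 25; 40; 52]].
Definition flats58 : seq (seq nat) := [:: [:: 0; 1; 49; 50; 51; 52; 57];
 [:: 6; 7; 12; 13; 16; 17; 18; 19; 20; 33; 34; 39; 40; 43; 44; 45; 46; 49; 50; 55; 56; 57];
 [:: 0; 1; 18; 19; 20; 21; 22; 23; 24; 57];
 [:: 2; 6; 10; 21; 31; 39; 41; 47; 49];
 [:: 0; 1; 25; 26; 27; 28; 57];
 [:: 0; 1; 10; 11; 12; 13; 57];
 [:: 0; 1; 14; 15; 16; 17; 25; 26; 27; 28; 33; 34; 35; 36; 53; 54; 55; 56; 57];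
 [:: 21; 27; 29; 35; 37; 41; 45; 49; 55];
 [:: 0; 1; 2; 3; 4; 5; 57];
 [:: 0; 1; 2; 3; 4; 5; 45; 46; 47; 48; 49; 50; 51; 52; 53; 54; 55; 56; 57];
 [:: 4; 5; 8; 9; 12; 13; 23; 24; 29; 30; 37; 38; 43; 44; 45; 46; 51; 52; 57];
 [:: 6; 12; 16; 23; 25; 31; 35; 37; 41];
 [:: 0; 1; 45; 46; 47; 48; 57];
 [:: 0; 1; 14; 15; 16; 17; 29; 30; 31; 32; 37; 38; 39; 40; 45; 46; 47; 48; 57];
 [:: 0; 1; 29; 30; 31; 32; 57];
 [:: 2; 3; 6; 7; 10; 11; 18; 19; 20; 25; 26; 29; 30; 33; 34; 37; 38; 45; 46; 53; 54; 57];
 [:: 0; 6; 8; 29; 31; 41; 43; 53; 55];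
 [:: 0; 2; 4; 45; 47; 49; 51; 53; 55];
 [:: 23; 25; 31; 33; 39; 43; 47; 51; 53];
 [:: 0; 1; 6; 7; 8; 9; 18; 19; 20; 21; 22; 23; 24; 33; 34; 35; 36; 45; 46; 47; 48; 57];
 [:: 8; 10; 14; 23; 25; 31; 45; 49; 55];
 [:: 0; 1; 10; 11; 12; 13; 25; 26; 27; 28; 41; 42; 43; 44; 45; 46; 47; 48; 57];
 [:: 4; 5; 10; 11; 16; 17; 21; 22; 25; 26; 35; 36; 39; 40; 45; 46; 51; 52; 57];
 [:: 4; 5; 10; 11; 16; 17; 23; 24; 29; 30; 33; 34; 41; 42; 47; 48; 55; 56; 57];
 [:: 4; 10; 16; 21; 25; 35; 39; 45; 51];
 [:: 2; 3; 8; 9; 16; 17; 21; 22; 31; 32; 33; 34; 37; 38; 51; 52; 55; 56; 57];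
 [:: 2; 6; 10; 23; 27; 35; 43; 51; 55];
 [:: 0; 1; 2; 3; 4; 5; 33; 34; 35; 36; 37; 38; 39; 40; 41; 42; 43; 44; 57];
 [:: 0; 2; 4; 33; 35; 37; 39; 41; 43];
 [:: 0; 1; 10; 11; 12; 13; 29; 30; 31; 32; 33; 34; 35; 36; 49; 50; 51; 52; 57];
 [:: 8; 9; 10; 11; 14; 15; 21; 22; 27; 28; 29; 30; 33; 34; 39; 40; 43; 44; 57];
 [:: 0; 10; 12; 25; 27; 41; 43; 45; 47];
 [:: 0; 1; 10; 11; 12; 13; 18; 19; 20; 21; 22; 23; 24; 37; 38; 39; 40; 53; 54; 55; 56; 57];
 [:: 0; 1; 6; 7; 8; 9; 25; 26; 27; 28; 37; 38; 39; 40; 49; 50; 51; 52; 57];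
 [:: 2; 8; 16; 21; 31; 33; 37; 51; 55];
 [:: 4; 5; 10; 11; 16; 17; 18; 19; 20; 27; 28; 31; 32; 37; 38; 43; 44; 49; 50; 53; 54; 57];
 [:: 0; 1; 14; 15; 16; 17; 18; 19; 20; 21; 22; 23; 24; 41; 42; 43; 44; 49; 50; 51; 52; 57];
 [:: 0; 1; 33; 34; 35; 36; 57];
 [:: 2; 3; 6; 7; 10; 11; 21; 22; 31; 32; 39; 40; 41; 42; 47; 48; 49; 50; 57];
 [:: 4; 5; 6; 7; 14; 15; 21; 22; 25; 26; 37; 38; 43; 44; 47; 48; 55; 56; 57];
 [:: 0; 1; 6; 7; 8; 9; 29; 30; 31; 32; 41; 42; 43; 44; 53; 54; 55; 56; 57];
 [:: 6; 12; 16; 21; 27; 29; 47; 51; 53];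
 [:: 8; 9; 10; 11; 14; 15; 18; 19; 20; 35; 36; 37; 38; 41; 42; 47; 48; 51; 52; 53; 54; 57];
 [:: 6; 7; 12; 13; 16; 17; 23; 24; 25; 26; 31; 32; 35; 36; 37; 38; 41; 42; 57];
 [:: 4; 6; 14; 23; 29; 35; 39; 49; 53];
 [:: 2; 12; 14; 23; 27; 33; 37; 47; 49];
 [:: 0; 14; 16; 25; 27; 33; 35; 53; 55];
 [:: 0; 1; 37; 38; 39; 40; 57];
 [:: 4; 5; 6; 7; 14; 15; 18; 19; 20; 27; 28; 31; 32; 33; 34; 41; 42; 45; 46; 51; 52; 57];
 [:: 0; 6; 8; 25; 27; 37; 39; 49; 51];
 [:: 4; 5; 8; 9; 12; 13; 21; 22; 25; 26; 33; 34; 41; 42; 49; 50; 53; 54; 57];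
 [:: 0; 1; 53; 54; 55; 56; 57];
 [:: 21; 22; 27; 28; 29; 30; 35; 36; 37; 38; 41; 42; 45; 46; 49; 50; 55; 56; 57];
 [:: 4; 6; 14; 21; 25; 37; 43; 47; 55];
 [:: 2; 8; 16; 23; 27; 39; 41; 45; 53];
 [:: 0; 1; 2; 3; 4; 5; 6; 7; 8; 9; 10; 11; 12; 13; 14; 15; 16; 17; 57];
 [:: 4; 8; 12; 21; 25; 33; 41; 49; 53];
 [:: 0; 1; 2; 3; 4; 5; 18; 19; 20; 21; 22; 23; 24; 25; 26; 27; 28; 29; 30; 31; 32; 57];
 [:: 8; 9; 10; 11; 14; 15; 23; 24; 25; 26; 31; 32; 45; 46; 49; 50; 55; 56; 57];
 [:: 0; 10; 12; 29; 31; 33; 35; 49; 51];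
 [:: 0; 2; 4; 6; 8; 10; 12; 14; 16];
 [:: 0; 1; 6; 7; 8; 9; 57];
 [:: 2; 3; 6; 7; 10; 11; 23; 24; 27; 28; 35; 36; 43; 44; 51; 52; 55; 56; 57];
 [:: 8; 10; 14; 21; 27; 29; 33; 39; 43];
 [:: 6; 7; 12; 13; 16; 17; 21; 22; 27; 28; 29; 30; 47; 48; 51; 52; 53; 54; 57];
 [:: 2; 3; 8; 9; 16; 17; 18; 19; 20; 25; 26; 29; 30; 35; 36; 43; 44; 47; 48; 49; 50; 57];
 [:: 0; 14; 16; 29; 31; 37; 39; 45; 47];
 [:: 4; 5; 6; 7; 14; 15; 23; 24; 29; 30; 35; 36; 39; 40; 49; 50; 53; 54; 57];
 [:: 4; 10; 16; 23; 29; 33; 41; 47; 55];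
 [:: 2; 3; 12; 13; 14; 15; 21; 22; 31; 32; 35; 36; 43; 44; 45; 46; 53; 54; 57];
 [:: 0; 1; 14; 15; 16; 17; 57];
 [:: 0; 1; 41; 42; 43; 44; 57];
 [:: 2; 3; 8; 9; 16; 17; 23; 24; 27; 28; 39; 40; 41; 42; 45; 46; 53; 54; 57];
 [:: 2; 3; 12; 13; 14; 15; 23; 24; 27; 28; 33; 34; 37; 38; 47; 48; 49; 50; 57];
 [:: 2; 12; 14; 21; 31; 35; 43; 45; 53];
 [:: 4; 5; 8; 9; 12; 13; 18; 19; 20; 27; 28; 31; 32; 35; 36; 39; 40; 47; 48; 55; 56; 57];
 [:: 4; 8; 12; 23; 29; 37; 43; 45; 51];
 [:: 23; 24; 25; 26; 31; 32; 33; 34; 39; 40; 43; 44; 47; 48; 51; 52; 53; 54; 57];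
 [:: 2; 3; 12; 13; 14; 15; 18; 19; 20; 25; 26; 29; 30; 39; 40; 41; 42; 51; 52; 55; 56; 57]].

Definition blocks66 : seq (seq nat) := [:: [:: 4; 12; 21];
 [:: 8; 10; 19];
 [:: 8; 16; 20];
 [:: 7; 10; 20];
 [:: 8; 15; 21];
 [:: 9; 11; 17];
 [:: 3; 15; 19];
 [:: 3; 16; 18];
 [:: 4; 10; 23];
 [:: 8; 14; 22];
 [:: 6; 14; 17];
 [:: 8; 13; 23];
 [:: 3; 10; 17];
 [:: 5; 14; 18];
 [:: 7; 14; 23];
 [:: 9; 16; 19];
 [:: 6; 13; 18];
 [:: 6; 12; 19];
 [:: 9; 10; 18];
 [:: 5; 12; 20];
 [:: 5; 13; 19];
 [:: 3; 14; 20];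
 [:: 3; 13; 21];
 [:: 9; 15; 20];
 [:: 4; 15; 18];
 [:: 4; 16; 17];
 [:: 8; 11; 18];
 [:: 5; 11; 21];
 [:: 7; 13; 17];
 [:: 3; 12; 22];
 [:: 6; 16; 22];
 [:: 9; 14; 21];
 [:: 8; 12; 17];
 [:: 9; 13; 22];
 [:: 5; 16; 23];
 [:: 6; 10; 21];
 [:: 6; 11; 20];
 [:: 5; 10; 22];
 [:: 4; 14; 19];
 [:: 6; 15; 23];
 [:: 3; 11; 23];
 [:: 9; 12; 23];
 [:: 7; 12; 18];
 [:: 4; 13; 20];
 [:: 7; 11; 19];
 [:: 5; 15; 17];
 [:: 7; 16; 21];
 [:: 4; 11; 22];
 [:: 7; 15; 22];
 [:: 4; 24; 50];
 [:: 8; 30; 46];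
 [:: 6; 27; 48];
 [:: 8; 29; 50];
 [:: 6; 30; 50];
 [:: 5; 30; 45];
 [:: 3; 28; 50];
 [:: 7; 29; 45];
 [:: 6; 24; 46];
 [:: 8; 26; 48];
 [:: 5; 29; 49];
 [:: 4; 27; 45];
 [:: 3; 25; 48];
 [:: 7; 25; 47];
 [:: 4; 30; 47];
 [:: 5; 26; 47];
 [:: 7; 28; 49];
 [:: 9; 28; 45];
 [:: 9; 30; 51];
 [:: 4; 29; 51];
 [:: 6; 29; 47];
 [:: 5; 25; 51];
 [:: 9; 24; 47];
 [:: 9; 27; 49];
 [:: 7; 24; 51];
 [:: 8; 25; 45];
 [:: 4; 26; 49];
 [:: 6; 26; 45];
 [:: 3; 24; 45];
 [:: 5; 28; 46];
 [:: 5; 27; 50];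
 [:: 3; 27; 47];
 [:: 6; 25; 49];
 [:: 3; 30; 49];
 [:: 6; 28; 51];
 [:: 8; 28; 47];
 [:: 8; 27; 51];
 [:: 5; 24; 48];
 [:: 7; 27; 46];
 [:: 3; 26; 51];
 [:: 4; 25; 46];
 [:: 7; 30; 48];
 [:: 8; 24; 49];
 [:: 9; 29; 48];
 [:: 4; 28; 48];
 [:: 7; 26; 50];
 [:: 9; 26; 46];
 [:: 9; 25; 50];
 [:: 3; 29; 46];
 [:: 8; 31; 60];
 [:: 6; 31; 61];
 [:: 9; 31; 63];
 [:: 7; 31; 64];
 [:: 4; 37; 59];
 [:: 8; 37; 64];
 [:: 3; 36; 60];
 [:: 9; 37; 60];
 [:: 4; 36; 63];
 [:: 7; 34; 59];
 [:: 3; 32; 62];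
 [:: 5; 34; 60];
 [:: 7; 37; 61];
 [:: 5; 37; 62];
 [:: 6; 33; 60];
 [:: 4; 33; 61];
 [:: 4; 32; 65];
 [:: 7; 36; 65];
 [:: 8; 33; 59];
 [:: 9; 36; 64];
 [:: 8; 36; 61];
 [:: 6; 36; 62];
 [:: 9; 34; 65];
 [:: 5; 33; 64];
 [:: 9; 33; 62];
 [:: 7; 33; 63];
 [:: 3; 35; 64];
 [:: 5; 35; 63];
 [:: 8; 32; 63];
 [:: 8; 35; 65];
 [:: 5; 36; 59];
 [:: 6; 32; 64];
 [:: 4; 35; 60];
 [:: 9; 32; 59];
 [:: 7; 32; 60];
 [:: 3; 34; 61];
 [:: 3; 37; 63];
 [:: 4; 31; 62];
 [:: 6; 35; 59];
 [:: 8; 34; 62];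
 [:: 6; 37; 65];
 [:: 6; 34; 63];
 [:: 4; 34; 64];
 [:: 3; 31; 59];
 [:: 5; 32; 61];
 [:: 5; 31; 65];
 [:: 9; 35; 61];
 [:: 7; 35; 62];
 [:: 3; 33; 65];
 [:: 3; 38; 52];
 [:: 3; 40; 58];
 [:: 4; 38; 58];
 [:: 9; 41; 55];
 [:: 3; 44; 56];
 [:: 9; 44; 57];
 [:: 8; 43; 55];
 [:: 4; 44; 55];
 [:: 7; 40; 54];
 [:: 9; 38; 53];
 [:: 7; 43; 56];
 [:: 8; 40; 53];
 [:: 4; 41; 53];
 [:: 8; 39; 57];
 [:: 6; 42; 54];
 [:: 6; 41; 58];
 [:: 5; 42; 55];
 [:: 7; 39; 58];
 [:: 3; 43; 53];
 [:: 6; 39; 52];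
 [:: 6; 38; 56];
 [:: 5; 39; 53];
 [:: 4; 40; 57];
 [:: 5; 38; 57];
 [:: 3; 39; 55];
 [:: 9; 43; 54];
 [:: 9; 42; 58];
 [:: 3; 42; 57];
 [:: 8; 42; 52];
 [:: 9; 40; 52];
 [:: 5; 41; 52];
 [:: 9; 39; 56];
 [:: 5; 44; 54];
 [:: 7; 42; 53];
 [:: 7; 41; 57];
 [:: 8; 38; 54];
 [:: 4; 39; 54];
 [:: 4; 43; 52];
 [:: 8; 41; 56];
 [:: 4; 42; 56];
 [:: 7; 38; 55];
 [:: 6; 44; 53];
 [:: 8; 44; 58];
 [:: 6; 43; 57];
 [:: 5; 40; 56];
 [:: 3; 41; 54];
 [:: 5; 43; 58];
 [:: 7; 44; 52];
 [:: 6; 40; 55];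
 [:: 12; 30; 61];
 [:: 12; 29; 65];
 [:: 13; 26; 62];
 [:: 11; 30; 62];
 [:: 14; 25; 65];
 [:: 13; 29; 64];
 [:: 12; 26; 63];
 [:: 16; 29; 61];
 [:: 15; 25; 64];
 [:: 11; 26; 64];
 [:: 10; 25; 62];
 [:: 16; 26; 59];
 [:: 16; 25; 63];
 [:: 14; 28; 60];
 [:: 10; 28; 64];
 [:: 15; 28; 59];
 [:: 11; 29; 59];
 [:: 15; 27; 63];
 [:: 14; 24; 62];
 [:: 15; 30; 65];
 [:: 16; 28; 65];
 [:: 12; 25; 60];
 [:: 14; 27; 64];
 [:: 15; 24; 61];
 [:: 11; 25; 61];
 [:: 13; 25; 59];
 [:: 10; 24; 59];
 [:: 11; 28; 63];
 [:: 13; 28; 61];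
 [:: 13; 27; 65];
 [:: 12; 28; 62];
 [:: 10; 27; 61];
 [:: 11; 24; 65];
 [:: 10; 30; 63];
 [:: 13; 24; 63];
 [:: 16; 24; 60];
 [:: 12; 24; 64];
 [:: 14; 30; 59];
 [:: 10; 26; 65];
 [:: 14; 29; 63];
 [:: 16; 27; 62];
 [:: 16; 30; 64];
 [:: 15; 26; 60];
 [:: 11; 27; 60];
 [:: 15; 29; 62];
 [:: 14; 26; 61];
 [:: 13; 30; 60];
 [:: 12; 27; 59];
 [:: 10; 29; 60];
 [:: 14; 33; 57];
 [:: 12; 32; 58];
 [:: 16; 36; 55];
 [:: 11; 35; 55];
 [:: 13; 36; 54];
 [:: 16; 32; 57];
 [:: 10; 36; 53];
 [:: 11; 31; 57];
 [:: 13; 33; 52];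
 [:: 13; 32; 56];
 [:: 15; 37; 53];
 [:: 15; 36; 57];
 [:: 13; 35; 58];
 [:: 11; 37; 54];
 [:: 10; 35; 57];
 [:: 14; 36; 52];
 [:: 12; 35; 53];
 [:: 12; 34; 57];
 [:: 15; 33; 55];
 [:: 16; 37; 58];
 [:: 11; 34; 52];
 [:: 10; 32; 55];
 [:: 14; 32; 54];
 [:: 12; 31; 55];
 [:: 11; 36; 58];
 [:: 14; 35; 56];
 [:: 16; 35; 52];
 [:: 16; 34; 56];
 [:: 11; 33; 56];
 [:: 14; 31; 58];
 [:: 16; 31; 54];
 [:: 10; 34; 54];
 [:: 12; 37; 52];
 [:: 13; 31; 53];
 [:: 10; 37; 56];
 [:: 10; 31; 52];
 [:: 15; 35; 54];
 [:: 14; 34; 53];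
 [:: 13; 34; 55];
 [:: 12; 33; 54];
 [:: 15; 34; 58];
 [:: 13; 37; 57];
 [:: 10; 33; 58];
 [:: 11; 32; 53];
 [:: 15; 32; 52];
 [:: 14; 37; 55];
 [:: 12; 36; 56];
 [:: 15; 31; 56];
 [:: 16; 33; 53];
 [:: 11; 44; 45];
 [:: 15; 44; 50];
 [:: 16; 38; 49];
 [:: 14; 38; 50];
 [:: 12; 40; 50];
 [:: 10; 40; 51];
 [:: 14; 41; 45];
 [:: 12; 43; 45];
 [:: 10; 43; 46];
 [:: 16; 44; 46];
 [:: 11; 40; 47];
 [:: 15; 43; 47];
 [:: 11; 43; 49];
 [:: 12; 39; 47];
 [:: 14; 44; 47];
 [:: 10; 42; 50];
 [:: 14; 43; 51];
 [:: 12; 42; 49];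
 [:: 15; 40; 45];
 [:: 16; 43; 50];
 [:: 11; 39; 51];
 [:: 13; 42; 45];
 [:: 10; 39; 48];
 [:: 13; 41; 49];
 [:: 15; 42; 51];
 [:: 14; 40; 49];
 [:: 13; 44; 51];
 [:: 16; 40; 48];
 [:: 12; 38; 51];
 [:: 13; 38; 47];
 [:: 15; 39; 49];
 [:: 13; 39; 50];
 [:: 10; 41; 47];
 [:: 12; 41; 46];
 [:: 11; 42; 46];
 [:: 11; 41; 50];
 [:: 12; 44; 48];
 [:: 10; 38; 45];
 [:: 14; 39; 46];
 [:: 13; 43; 48];
 [:: 16; 39; 45];
 [:: 11; 38; 48];
 [:: 14; 42; 48];
 [:: 16; 41; 51];
 [:: 16; 42; 47];
 [:: 15; 38; 46];
 [:: 10; 44; 49];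
 [:: 13; 40; 46];
 [:: 15; 41; 48];
 [:: 23; 29; 57];
 [:: 22; 26; 52];
 [:: 18; 26; 54];
 [:: 22; 29; 54];
 [:: 18; 25; 58];
 [:: 17; 30; 56];
 [:: 17; 24; 52];
 [:: 21; 25; 53];
 [:: 23; 26; 55];
 [:: 20; 28; 52];
 [:: 20; 27; 56];
 [:: 19; 25; 54];
 [:: 19; 28; 56];
 [:: 21; 28; 55];
 [:: 17; 26; 58];
 [:: 20; 24; 54];
 [:: 22; 28; 58];
 [:: 20; 30; 58];
 [:: 21; 24; 57];
 [:: 19; 24; 58];
 [:: 22; 25; 56];
 [:: 18; 28; 53];
 [:: 23; 25; 52];
 [:: 21; 27; 52];
 [:: 19; 27; 53];
 [:: 18; 24; 55];
 [:: 17; 29; 53];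
 [:: 21; 30; 54];
 [:: 19; 30; 55];
 [:: 18; 27; 57];
 [:: 20; 29; 55];
 [:: 22; 30; 57];
 [:: 17; 25; 55];
 [:: 23; 28; 54];
 [:: 23; 27; 58];
 [:: 21; 26; 56];
 [:: 17; 28; 57];
 [:: 22; 24; 53];
 [:: 21; 29; 58];
 [:: 20; 26; 53];
 [:: 22; 27; 55];
 [:: 19; 26; 57];
 [:: 23; 24; 56];
 [:: 17; 27; 54];
 [:: 19; 29; 52];
 [:: 20; 25; 57];
 [:: 18; 30; 52];
 [:: 18; 29; 56];
 [:: 23; 30; 53];
 [:: 20; 36; 50];
 [:: 21; 31; 48];
 [:: 19; 37; 47];
 [:: 17; 34; 47];
 [:: 19; 36; 51];
 [:: 22; 32; 50];
 [:: 18; 33; 50];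
 [:: 20; 33; 48];
 [:: 23; 33; 45];
 [:: 17; 31; 45];
 [:: 19; 33; 49];
 [:: 23; 37; 50];
 [:: 23; 36; 47];
 [:: 22; 35; 45];
 [:: 21; 37; 45];
 [:: 17; 37; 49];
 [:: 22; 34; 49];
 [:: 18; 36; 45];
 [:: 23; 32; 49];
 [:: 23; 35; 51];
 [:: 22; 31; 47];
 [:: 17; 33; 51];
 [:: 18; 32; 47];
 [:: 21; 36; 49];
 [:: 20; 35; 47];
 [:: 22; 37; 51];
 [:: 21; 33; 47];
 [:: 21; 32; 51];
 [:: 19; 32; 46];
 [:: 19; 35; 48];
 [:: 17; 36; 46];
 [:: 20; 32; 45];
 [:: 20; 31; 49];
 [:: 18; 35; 49];
 [:: 20; 34; 51];
 [:: 19; 31; 50];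
 [:: 23; 34; 48];
 [:: 17; 32; 48];
 [:: 17; 35; 50];
 [:: 18; 31; 51];
 [:: 23; 31; 46];
 [:: 22; 36; 48];
 [:: 21; 35; 46];
 [:: 19; 34; 45];
 [:: 22; 33; 46];
 [:: 21; 34; 50];
 [:: 18; 34; 46];
 [:: 18; 37; 48];
 [:: 20; 37; 46];
 [:: 22; 41; 65];
 [:: 19; 40; 61];
 [:: 19; 39; 65];
 [:: 21; 39; 61];
 [:: 23; 43; 62];
 [:: 17; 42; 64];
 [:: 21; 42; 63];
 [:: 18; 39; 60];
 [:: 22; 38; 63];
 [:: 18; 42; 62];
 [:: 23; 40; 60];
 [:: 23; 39; 64];
 [:: 21; 38; 65];
 [:: 20; 43; 61];
 [:: 18; 38; 64];
 [:: 20; 40; 59];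
 [:: 22; 44; 60];
 [:: 17; 44; 63];
 [:: 17; 38; 59];
 [:: 22; 43; 64];
 [:: 20; 39; 63];
 [:: 17; 41; 61];
 [:: 19; 42; 60];
 [:: 21; 44; 62];
 [:: 18; 41; 59];
 [:: 22; 40; 62];
 [:: 20; 42; 65];
 [:: 19; 38; 62];
 [:: 21; 41; 60];
 [:: 23; 42; 59];
 [:: 19; 41; 64];
 [:: 17; 40; 65];
 [:: 18; 44; 61];
 [:: 18; 43; 65];
 [:: 23; 38; 61];
 [:: 23; 41; 63];
 [:: 21; 40; 64];
 [:: 23; 44; 65];
 [:: 18; 40; 63];
 [:: 17; 43; 60];
 [:: 20; 41; 62];
 [:: 22; 39; 59];
 [:: 20; 44; 64];
 [:: 19; 44; 59];
 [:: 20; 38; 60];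
 [:: 19; 43; 63];
 [:: 21; 43; 59];
 [:: 17; 39; 62];
 [:: 22; 42; 61];
 [:: 25; 33; 42];
 [:: 30; 32; 43];
 [:: 24; 31; 38];
 [:: 26; 35; 39];
 [:: 26; 34; 43];
 [:: 24; 34; 40];
 [:: 24; 37; 42];
 [:: 27; 32; 42];
 [:: 29; 35; 40];
 [:: 26; 31; 41];
 [:: 27; 35; 44];
 [:: 30; 35; 38];
 [:: 30; 34; 42];
 [:: 28; 34; 39];
 [:: 29; 34; 44];
 [:: 28; 37; 41];
 [:: 24; 33; 44];
 [:: 25; 32; 39];
 [:: 30; 31; 40];
 [:: 29; 31; 42];
 [:: 25; 35; 41];
 [:: 28; 33; 43];
 [:: 30; 37; 44];
 [:: 25; 31; 43];
 [:: 24; 36; 39];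
 [:: 27; 34; 41];
 [:: 27; 37; 43];
 [:: 29; 37; 39];
 [:: 28; 36; 38];
 [:: 29; 36; 43];
 [:: 26; 37; 38];
 [:: 24; 32; 41];
 [:: 27; 31; 39];
 [:: 26; 36; 42];
 [:: 24; 35; 43];
 [:: 25; 34; 38];
 [:: 29; 33; 41];
 [:: 25; 37; 40];
 [:: 26; 33; 40];
 [:: 28; 32; 40];
 [:: 30; 36; 41];
 [:: 28; 35; 42];
 [:: 27; 36; 40];
 [:: 30; 33; 39];
 [:: 26; 32; 44];
 [:: 28; 31; 44];
 [:: 25; 36; 44];
 [:: 27; 33; 38];
 [:: 29; 32; 38];
 [:: 45; 52; 59];
 [:: 45; 54; 62];
 [:: 47; 58; 60];
 [:: 50; 52; 60];
 [:: 48; 52; 61];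
 [:: 46; 55; 63];
 [:: 46; 56; 61];
 [:: 51; 52; 63];
 [:: 49; 52; 64];
 [:: 47; 52; 65];
 [:: 45; 55; 60];
 [:: 45; 56; 65];
 [:: 48; 55; 62];
 [:: 48; 54; 64];
 [:: 50; 54; 63];
 [:: 46; 57; 59];
 [:: 50; 55; 61];
 [:: 49; 53; 62];
 [:: 46; 58; 64];
 [:: 49; 55; 65];
 [:: 47; 53; 63];
 [:: 48; 53; 59];
 [:: 45; 57; 63];
 [:: 51; 53; 61];
 [:: 47; 54; 61];
 [:: 48; 57; 65];
 [:: 49; 54; 60];
 [:: 50; 57; 64];
 [:: 45; 58; 61];
 [:: 48; 56; 60];
 [:: 46; 52; 62];
 [:: 50; 56; 59];
 [:: 51; 54; 59];
 [:: 50; 58; 62];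
 [:: 47; 55; 59];
 [:: 51; 55; 64];
 [:: 47; 56; 64];
 [:: 51; 56; 62];
 [:: 49; 56; 63];
 [:: 46; 53; 60];
 [:: 48; 58; 63];
 [:: 46; 54; 65];
 [:: 45; 53; 64];
 [:: 49; 57; 61];
 [:: 47; 57; 62];
 [:: 51; 57; 60];
 [:: 49; 58; 59];
 [:: 51; 58; 65];
 [:: 50; 53; 65];
 [:: 0; 1; 2];
 [:: 1; 5; 6; 9];
 [:: 2; 7; 8; 9];
 [:: 0; 3; 4; 9];
 [:: 3; 5; 7];
 [:: 4; 6; 8];
 [:: 1; 4; 7];
 [:: 0; 5; 8];
 [:: 2; 3; 6];
 [:: 2; 4; 5];
 [:: 1; 3; 8];
 [:: 0; 6; 7];
 [:: 1; 12; 13; 16];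
 [:: 2; 14; 15; 16];
 [:: 0; 10; 11; 16];
 [:: 10; 12; 14];
 [:: 11; 13; 15];
 [:: 1; 11; 14];
 [:: 0; 12; 15];
 [:: 2; 10; 13];
 [:: 2; 11; 12];
 [:: 1; 10; 15];
 [:: 0; 13; 14];
 [:: 1; 19; 20; 23];
 [:: 2; 21; 22; 23];
 [:: 0; 17; 18; 23];
 [:: 17; 19; 21];
 [:: 18; 20; 22];
 [:: 1; 18; 21];
 [:: 0; 19; 22];
 [:: 2; 17; 20];
 [:: 2; 18; 19];
 [:: 1; 17; 22];
 [:: 0; 20; 21];
 [:: 1; 26; 27; 30];
 [:: 2; 28; 29; 30];
 [:: 0; 24; 25; 30];
 [:: 24; 26; 28];
 [:: 25; 27; 29];
 [:: 1; 25; 28];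
 [:: 0; 26; 29];
 [:: 2; 24; 27];
 [:: 2; 25; 26];
 [:: 1; 24; 29];
 [:: 0; 27; 28];
 [:: 1; 33; 34; 37];
 [:: 2; 35; 36; 37];
 [:: 0; 31; 32; 37];
 [:: 31; 33; 35];
 [:: 32; 34; 36];
 [:: 1; 32; 35];
 [:: 0; 33; 36];
 [:: 2; 31; 34];
 [:: 2; 32; 33];
 [:: 1; 31; 36];
 [:: 0; 34; 35];
 [:: 1; 40; 41; 44];
 [:: 2; 42; 43; 44];
 [:: 0; 38; 39; 44];
 [:: 38; 40; 42];
 [:: 39; 41; 43];
 [:: 1; 39; 42];
 [:: 0; 40; 43];
 [:: 2; 38; 41];
 [:: 2; 39; 40];
 [:: 1; 38; 43];
 [:: 0; 41; 42];
 [:: 1; 47; 48; 51];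
 [:: 2; 49; 50; 51];
 [:: 0; 45; 46; 51];
 [:: 45; 47; 49];
 [:: 46; 48; 50];
 [:: 1; 46; 49];
 [:: 0; 47; 50];
 [:: 2; 45; 48];
 [:: 2; 46; 47];
 [:: 1; 45; 50];
 [:: 0; 48; 49];
 [:: 1; 54; 55; 58];
 [:: 2; 56; 57; 58];
 [:: 0; 52; 53; 58];
 [:: 52; 54; 56];
 [:: 53; 55; 57];
 [:: 1; 53; 56];
 [:: 0; 54; 57];
 [:: 2; 52; 55];
 [:: 2; 53; 54];
 [:: 1; 52; 57];
 [:: 0; 55; 56];
 [:: 1; 61; 62; 65];
 [:: 2; 63; 64; 65];
 [:: 0; 59; 60; 65];
 [:: 59; 61; 63];
 [:: 60; 62; 64];
 [:: 1; 60; 63];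
 [:: 0; 61; 64];
 [:: 2; 59; 62];
 [:: 2; 60; 61];
 [:: 1; 59; 64];
 [:: 0; 62; 63]].
Definition flats66 : seq (seq nat) := [:: [:: 0; 1; 2; 38; 39; 40; 41; 42; 43; 44];
 [:: 4; 15; 18; 25; 34; 38; 46; 58; 64];
 [:: 5; 10; 22; 25; 37; 40; 51; 56; 62];
 [:: 5; 12; 20; 25; 34; 38; 51; 57; 60];
 [:: 5; 16; 23; 29; 32; 38; 49; 57; 61];
 [:: 9; 16; 19; 27; 33; 38; 49; 53; 62];
 [:: 8; 10; 19; 25; 34; 38; 45; 54; 62];
 [:: 3; 12; 22; 25; 36; 44; 48; 56; 60];
 [:: 4; 15; 18; 26; 35; 39; 49; 54; 60];
 [:: 6; 11; 20; 24; 37; 42; 46; 54; 65];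
 [:: 8; 16; 20; 24; 31; 38; 49; 54; 60];
 [:: 5; 15; 17; 30; 31; 40; 45; 56; 65];
 [:: 3; 16; 18; 30; 35; 38; 49; 52; 64];
 [:: 4; 16; 17; 30; 34; 42; 47; 56; 64];
 [:: 9; 14; 21; 30; 32; 43; 51; 54; 59];
 [:: 6; 14; 17; 30; 35; 38; 50; 56; 59];
 [:: 4; 12; 21; 28; 31; 44; 48; 55; 62];
 [:: 7; 15; 22; 28; 34; 39; 49; 58; 59];
 [:: 6; 15; 23; 28; 35; 42; 51; 54; 59];
 [:: 0; 1; 2; 3; 4; 5; 6; 7; 8; 9; 38; 39; 40; 41; 42; 43; 44; 52; 53; 54; 55; 56; 57; 58];
 [:: 4; 15; 18; 24; 33; 44; 50; 55; 61];
 [:: 8; 14; 22; 24; 34; 40; 49; 53; 62];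
 [:: 6; 13; 18; 24; 34; 40; 46; 55; 63];
 [:: 5; 16; 23; 25; 35; 41; 51; 52; 63];
 [:: 7; 12; 18; 26; 33; 40; 50; 54; 63];
 [:: 3; 10; 17; 24; 31; 38; 45; 52; 59];
 [:: 6; 16; 22; 24; 33; 44; 46; 53; 60];
 [:: 4; 16; 17; 29; 33; 41; 51; 53; 61];
 [:: 9; 10; 18; 27; 35; 44; 49; 57; 61];
 [:: 6; 11; 20; 25; 31; 43; 49; 57; 61];
 [:: 4; 16; 17; 28; 32; 40; 48; 57; 65];
 [:: 8; 15; 21; 24; 36; 39; 49; 57; 61];
 [:: 9; 11; 17; 30; 33; 39; 51; 56; 62];
 [:: 8; 11; 18; 27; 31; 39; 51; 57; 60];
 [:: 7; 13; 17; 24; 33; 44; 51; 52; 63];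
 [:: 6; 14; 17; 29; 34; 44; 47; 53; 63];
 [:: 5; 15; 17; 28; 36; 38; 46; 57; 59];
 [:: 5; 11; 21; 25; 32; 39; 51; 53; 61];
 [:: 9; 11; 17; 25; 35; 41; 50; 55; 61];
 [:: 9; 10; 18; 26; 34; 43; 46; 54; 65];
 [:: 8; 10; 19; 30; 32; 43; 46; 55; 63];
 [:: 7; 11; 19; 26; 31; 41; 50; 57; 64];
 [:: 4; 11; 22; 30; 31; 40; 47; 57; 62];
 [:: 9; 14; 21; 26; 35; 39; 46; 56; 61];
 [:: 8; 13; 23; 28; 36; 38; 47; 54; 61];
 [:: 3; 16; 18; 29; 34; 44; 46; 56; 61];
 [:: 9; 16; 19; 30; 36; 41; 51; 55; 64];
 [:: 0; 1; 2; 3; 4; 5; 6; 7; 8; 9];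
 [:: 8; 12; 17; 29; 35; 40; 50; 53; 65];
 [:: 9; 13; 22; 27; 34; 41; 49; 55; 65];
 [:: 3; 16; 18; 25; 37; 40; 48; 58; 63];
 [:: 6; 10; 21; 27; 31; 39; 48; 52; 61];
 [:: 0; 1; 2; 45; 46; 47; 48; 49; 50; 51];
 [:: 8; 11; 18; 24; 35; 43; 49; 55; 65];
 [:: 6; 11; 20; 30; 36; 41; 50; 58; 62];
 [:: 8; 15; 21; 25; 37; 40; 45; 53; 64];
 [:: 0; 1; 2];
 [:: 7; 12; 18; 27; 34; 41; 46; 57; 59];
 [:: 5; 10; 22; 28; 33; 43; 46; 58; 64];
 [:: 5; 14; 18; 30; 36; 41; 45; 52; 59];
 [:: 5; 13; 19; 28; 32; 40; 46; 56; 61];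
 [:: 4; 12; 21; 25; 35; 41; 46; 53; 60];
 [:: 5; 10; 22; 30; 35; 38; 45; 57; 63];
 [:: 0; 1; 2; 10; 11; 12; 13; 14; 15; 16; 31; 32; 33; 34; 35; 36; 37; 52; 53; 54; 55; 56; 57; 58];
 [:: 9; 13; 22; 28; 35; 42; 45; 58; 61];
 [:: 6; 12; 19; 24; 32; 41; 46; 58; 64];
 [:: 5; 11; 21; 30; 37; 44; 45; 54; 62];
 [:: 7; 10; 20; 30; 33; 39; 48; 58; 63];
 [:: 7; 12; 18; 24; 31; 38; 51; 55; 64];
 [:: 4; 14; 19; 25; 32; 39; 46; 54; 65];
 [:: 8; 12; 17; 25; 31; 43; 45; 55; 60];
 [:: 7; 13; 17; 26; 35; 39; 50; 58; 62];
 [:: 7; 13; 17; 29; 31; 42; 45; 53; 64];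
 [:: 9; 13; 22; 30; 37; 44; 51; 57; 60];
 [:: 3; 14; 20; 27; 35; 44; 47; 56; 64];
 [:: 9; 12; 23; 30; 35; 38; 51; 53; 61];
 [:: 4; 13; 20; 27; 32; 42; 45; 56; 65];
 [:: 5; 14; 18; 28; 34; 39; 46; 53; 60];
 [:: 9; 11; 17; 29; 32; 38; 48; 53; 59];
 [:: 5; 11; 21; 24; 31; 38; 48; 57; 65];
 [:: 3; 15; 19; 24; 34; 40; 45; 58; 61];
 [:: 7; 16; 21; 26; 34; 43; 50; 56; 59];
 [:: 6; 12; 19; 25; 33; 42; 49; 54; 60];
 [:: 6; 14; 17; 28; 33; 43; 51; 57; 60];
 [:: 0; 1; 2; 24; 25; 26; 27; 28; 29; 30; 31; 32; 33; 34; 35; 36; 37; 38; 39; 40; 41; 42; 43; 44];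
 [:: 6; 14; 17; 24; 36; 39; 46; 52; 62];
 [:: 4; 15; 18; 30; 32; 43; 47; 52; 65];
 [:: 5; 13; 19; 25; 36; 44; 51; 54; 59];
 [:: 9; 16; 19; 26; 32; 44; 46; 57; 59];
 [:: 3; 13; 21; 29; 35; 40; 46; 58; 64];
 [:: 0; 1; 2; 17; 18; 19; 20; 21; 22; 23; 31; 32; 33; 34; 35; 36; 37; 45; 46; 47; 48; 49; 50; 51];
 [:: 0; 1; 2; 24; 25; 26; 27; 28; 29; 30];
 [:: 8; 13; 23; 29; 37; 39; 50; 57; 64];
 [:: 5; 15; 17; 26; 34; 43; 47; 58; 60];
 [:: 8; 16; 20; 29; 36; 43; 50; 55; 61];
 [:: 7; 16; 21; 29; 37; 39; 45; 58; 61];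
 [:: 3; 13; 21; 25; 31; 43; 48; 53; 59];
 [:: 4; 12; 21; 27; 37; 43; 45; 52; 59];
 [:: 8; 11; 18; 28; 32; 40; 47; 53; 63];
 [:: 3; 12; 22; 30; 34; 42; 49; 57; 61];
 [:: 4; 12; 21; 24; 34; 40; 50; 57; 64];
 [:: 7; 15; 22; 26; 32; 44; 50; 52; 60];
 [:: 6; 12; 19; 29; 37; 39; 47; 52; 65];
 [:: 8; 13; 23; 26; 34; 43; 48; 55; 62];
 [:: 5; 11; 21; 28; 35; 42; 46; 55; 63];
 [:: 5; 11; 21; 29; 36; 43; 49; 58; 59];
 [:: 7; 10; 20; 24; 34; 40; 51; 54; 59];
 [:: 3; 12; 22; 24; 35; 43; 45; 53; 64];
 [:: 8; 10; 19; 28; 37; 41; 47; 56; 64];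
 [:: 9; 12; 23; 25; 37; 40; 50; 52; 60];
 [:: 6; 10; 21; 26; 37; 38; 45; 56; 65];
 [:: 3; 10; 17; 25; 32; 39; 48; 55; 62];
 [:: 9; 15; 20; 26; 37; 38; 46; 53; 60];
 [:: 7; 15; 22; 27; 33; 38; 46; 55; 63];
 [:: 9; 16; 19; 28; 34; 39; 45; 56; 65];
 [:: 3; 16; 18; 24; 36; 39; 45; 55; 60];
 [:: 4; 14; 19; 24; 31; 38; 50; 58; 62];
 [:: 8; 16; 20; 30; 37; 44; 46; 58; 64];
 [:: 5; 13; 19; 27; 31; 39; 50; 53; 65];
 [:: 9; 16; 19; 25; 31; 43; 50; 54; 63];
 [:: 0; 1; 2; 10; 11; 12; 13; 14; 15; 16];
 [:: 8; 15; 21; 29; 34; 44; 50; 58; 62];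
 [:: 5; 13; 19; 24; 35; 43; 48; 58; 63];
 [:: 5; 14; 18; 25; 31; 43; 51; 58; 65];
 [:: 4; 12; 21; 29; 32; 38; 51; 58; 65];
 [:: 3; 14; 20; 25; 33; 42; 48; 57; 65];
 [:: 5; 15; 17; 29; 37; 39; 49; 53; 62];
 [:: 9; 12; 23; 28; 33; 43; 45; 54; 62];
 [:: 7; 11; 19; 25; 37; 40; 47; 54; 61];
 [:: 5; 11; 21; 26; 33; 40; 47; 56; 64];
 [:: 9; 14; 21; 28; 37; 41; 45; 55; 60];
 [:: 4; 14; 19; 27; 34; 41; 45; 53; 64];
 [:: 7; 11; 19; 27; 32; 42; 46; 53; 60];
 [:: 5; 10; 22; 29; 34; 44; 49; 54; 60];
 [:: 0; 1; 2; 17; 18; 19; 20; 21; 22; 23];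
 [:: 7; 11; 19; 29; 34; 44; 45; 52; 59];
 [:: 0; 1; 2; 17; 18; 19; 20; 21; 22; 23; 38; 39; 40; 41; 42; 43; 44; 59; 60; 61; 62; 63; 64; 65];
 [:: 4; 11; 22; 24; 32; 41; 50; 53; 65];
 [:: 7; 14; 23; 30; 34; 42; 48; 53; 59];
 [:: 9; 15; 20; 29; 33; 41; 48; 55; 62];
 [:: 3; 15; 19; 27; 37; 43; 47; 53; 63];
 [:: 7; 10; 20; 28; 31; 44; 49; 52; 64];
 [:: 7; 15; 22; 30; 36; 41; 48; 57; 65];
 [:: 9; 12; 23; 26; 31; 41; 46; 55; 63];
 [:: 4; 10; 23; 26; 32; 44; 49; 55; 65];
 [:: 6; 10; 21; 24; 35; 43; 46; 57; 59];
 [:: 4; 11; 22; 29; 37; 39; 51; 54; 59];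
 [:: 6; 12; 19; 28; 36; 38; 51; 56; 62];
 [:: 7; 10; 20; 26; 36; 42; 50; 53; 65];
 [:: 9; 13; 22; 26; 33; 40; 46; 52; 62];
 [:: 8; 16; 20; 27; 34; 41; 51; 56; 62];
 [:: 0; 1; 2; 31; 32; 33; 34; 35; 36; 37];
 [:: 8; 10; 19; 27; 36; 40; 51; 53; 61];
 [:: 4; 13; 20; 26; 31; 41; 49; 53; 62];
 [:: 0; 1; 2; 3; 4; 5; 6; 7; 8; 9; 24; 25; 26; 27; 28; 29; 30; 45; 46; 47; 48; 49; 50; 51];
 [:: 3; 13; 21; 30; 36; 41; 49; 54; 60];
 [:: 4; 13; 20; 24; 36; 39; 50; 54; 63];
 [:: 9; 15; 20; 27; 31; 39; 49; 56; 63];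
 [:: 6; 13; 18; 25; 35; 41; 49; 58; 59];
 [:: 4; 13; 20; 30; 35; 38; 47; 58; 60];
 [:: 6; 14; 17; 26; 31; 41; 45; 58; 61];
 [:: 3; 10; 17; 29; 36; 43; 46; 53; 60];
 [:: 4; 10; 23; 28; 34; 39; 48; 54; 64];
 [:: 9; 14; 21; 29; 31; 42; 48; 58; 63];
 [:: 8; 13; 23; 30; 31; 40; 46; 53; 60];
 [:: 5; 12; 20; 29; 31; 42; 49; 55; 65];
 [:: 7; 15; 22; 24; 37; 42; 51; 53; 61];
 [:: 7; 13; 17; 25; 34; 38; 47; 55; 59];
 [:: 9; 12; 23; 24; 36; 39; 47; 56; 64];
 [:: 4; 13; 20; 25; 37; 40; 46; 57; 59];
 [:: 7; 13; 17; 27; 36; 40; 46; 54; 65];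
 [:: 5; 12; 20; 30; 32; 43; 45; 58; 61];
 [:: 3; 13; 21; 27; 33; 38; 47; 52; 65];
 [:: 8; 11; 18; 30; 34; 42; 46; 52; 62];
 [:: 5; 15; 17; 27; 35; 44; 50; 54; 63];
 [:: 8; 16; 20; 28; 35; 42; 47; 52; 65];
 [:: 7; 13; 17; 28; 37; 41; 49; 57; 61];
 [:: 3; 12; 22; 26; 37; 38; 51; 52; 63];
 [:: 4; 15; 18; 28; 37; 41; 48; 53; 59];
 [:: 6; 16; 22; 28; 37; 41; 51; 58; 65];
 [:: 7; 10; 20; 27; 37; 43; 46; 56; 61];
 [:: 5; 12; 20; 28; 37; 41; 46; 52; 62];
 [:: 3; 16; 18; 27; 32; 42; 47; 57; 62];
 [:: 4; 13; 20; 28; 33; 43; 48; 52; 61];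
 [:: 8; 12; 17; 28; 34; 39; 47; 57; 62];
 [:: 6; 15; 23; 24; 31; 38; 46; 56; 61];
 [:: 6; 13; 18; 27; 37; 43; 48; 57; 65];
 [:: 3; 10; 17; 28; 35; 42; 50; 57; 64];
 [:: 3; 16; 18; 28; 33; 43; 50; 53; 65];
 [:: 8; 15; 21; 26; 31; 41; 48; 56; 60];
 [:: 9; 14; 21; 25; 34; 38; 50; 53; 65];
 [:: 3; 15; 19; 26; 36; 42; 51; 57; 60];
 [:: 0; 1; 2; 10; 11; 12; 13; 14; 15; 16; 38; 39; 40; 41; 42; 43; 44; 45; 46; 47; 48; 49; 50; 51];
 [:: 7; 14; 23; 27; 31; 39; 46; 58; 64];
 [:: 6; 16; 22; 30; 32; 43; 50; 57; 64];
 [:: 8; 14; 22; 26; 36; 42; 48; 52; 61];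
 [:: 7; 11; 19; 24; 36; 39; 51; 58; 65];
 [:: 4; 11; 22; 26; 34; 43; 49; 52; 64];
 [:: 8; 15; 21; 30; 35; 38; 46; 54; 65];
 [:: 7; 16; 21; 28; 36; 38; 49; 55; 65];
 [:: 9; 10; 18; 30; 31; 40; 51; 52; 63];
 [:: 6; 12; 19; 30; 31; 40; 50; 55; 61];
 [:: 0; 1; 2; 17; 18; 19; 20; 21; 22; 23; 24; 25; 26; 27; 28; 29; 30; 52; 53; 54; 55; 56; 57; 58];
 [:: 3; 12; 22; 28; 32; 40; 50; 58; 62];
 [:: 8; 16; 20; 26; 33; 40; 48; 53; 59];
 [:: 7; 16; 21; 24; 32; 41; 51; 57; 60];
 [:: 5; 13; 19; 29; 33; 41; 49; 52; 64];
 [:: 3; 15; 19; 28; 31; 44; 50; 56; 59];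
 [:: 7; 16; 21; 25; 33; 42; 47; 53; 63];
 [:: 4; 11; 22; 28; 36; 38; 48; 58; 63];
 [:: 3; 13; 21; 28; 34; 39; 50; 55; 61];
 [:: 8; 14; 22; 28; 31; 44; 47; 58; 60];
 [:: 8; 10; 19; 26; 35; 39; 48; 57; 65];
 [:: 9; 11; 17; 27; 37; 43; 49; 54; 60];
 [:: 5; 15; 17; 24; 32; 41; 48; 52; 61];
 [:: 3; 13; 21; 24; 37; 42; 45; 57; 63];
 [:: 8; 11; 18; 25; 36; 44; 45; 58; 61];
 [:: 4; 10; 23; 29; 35; 40; 51; 57; 60];
 [:: 5; 14; 18; 27; 33; 38; 50; 57; 64];
 [:: 8; 14; 22; 29; 32; 38; 50; 54; 63];
 [:: 9; 14; 21; 24; 33; 44; 47; 57; 62];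
 [:: 9; 15; 20; 30; 34; 42; 51; 58; 65];
 [:: 8; 12; 17; 30; 36; 41; 46; 56; 61];
 [:: 8; 10; 19; 29; 31; 42; 50; 52; 60];
 [:: 4; 16; 17; 26; 37; 38; 49; 58; 59];
 [:: 8; 11; 18; 26; 37; 38; 48; 54; 64];
 [:: 7; 11; 19; 30; 35; 38; 48; 55; 62];
 [:: 9; 11; 17; 26; 36; 42; 46; 58; 64];
 [:: 3; 12; 22; 27; 31; 39; 47; 55; 59];
 [:: 4; 15; 18; 27; 36; 40; 45; 57; 63];
 [:: 5; 13; 19; 26; 37; 38; 47; 57; 62];
 [:: 0; 1; 2; 45; 46; 47; 48; 49; 50; 51; 52; 53; 54; 55; 56; 57; 58; 59; 60; 61; 62; 63; 64; 65];
 [:: 8; 15; 21; 27; 32; 42; 51; 52; 63];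
 [:: 6; 13; 18; 30; 33; 39; 50; 52; 60];
 [:: 3; 11; 23; 28; 37; 41; 50; 54; 63];
 [:: 4; 10; 23; 25; 31; 43; 46; 52; 62];
 [:: 6; 14; 17; 27; 32; 42; 48; 54; 64];
 [:: 5; 10; 22; 27; 32; 42; 50; 55; 61];
 [:: 5; 16; 23; 28; 31; 44; 46; 54; 65];
 [:: 7; 14; 23; 25; 36; 44; 47; 52; 65];
 [:: 9; 12; 23; 27; 32; 42; 49; 58; 59];
 [:: 4; 12; 21; 30; 33; 39; 47; 54; 61];
 [:: 9; 10; 18; 28; 36; 38; 45; 53; 64];
 [:: 3; 10; 17; 27; 34; 41; 47; 54; 61];
 [:: 3; 11; 23; 27; 36; 40; 47; 58; 60];
 [:: 6; 16; 22; 26; 35; 39; 45; 52; 59];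
 [:: 6; 12; 19; 27; 35; 44; 48; 53; 59];
 [:: 7; 16; 21; 30; 31; 40; 48; 54; 64];
 [:: 7; 15; 22; 29; 35; 40; 45; 54; 62];
 [:: 7; 10; 20; 29; 32; 38; 45; 55; 60];
 [:: 5; 14; 18; 26; 32; 44; 47; 54; 61];
 [:: 3; 14; 20; 29; 37; 39; 46; 55; 63];
 [:: 6; 10; 21; 25; 36; 44; 49; 53; 62];
 [:: 3; 11; 23; 26; 35; 39; 51; 55; 64];
 [:: 5; 12; 20; 26; 35; 39; 47; 53; 63];
 [:: 9; 15; 20; 28; 32; 40; 45; 52; 59];
 [:: 3; 13; 21; 26; 32; 44; 51; 56; 62];
 [:: 3; 14; 20; 30; 31; 40; 49; 58; 59];
 [:: 3; 15; 19; 30; 33; 39; 49; 55; 65];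
 [:: 6; 16; 22; 25; 34; 38; 49; 56; 63];
 [:: 0; 1; 2; 52; 53; 54; 55; 56; 57; 58];
 [:: 3; 16; 18; 26; 31; 41; 51; 54; 59];
 [:: 7; 16; 21; 27; 35; 44; 46; 52; 62];
 [:: 5; 11; 21; 27; 34; 41; 50; 52; 60];
 [:: 6; 11; 20; 29; 35; 40; 47; 55; 59];
 [:: 4; 14; 19; 28; 35; 42; 48; 56; 60];
 [:: 8; 14; 22; 30; 33; 39; 46; 57; 59];
 [:: 7; 14; 23; 24; 35; 43; 51; 56; 62];
 [:: 6; 15; 23; 29; 36; 43; 47; 57; 62];
 [:: 3; 11; 23; 24; 33; 44; 45; 56; 65];
 [:: 3; 11; 23; 30; 32; 43; 49; 53; 62];
 [:: 4; 14; 19; 30; 37; 44; 47; 55; 59];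
 [:: 3; 15; 19; 25; 35; 41; 48; 54; 64];
 [:: 7; 15; 22; 25; 31; 43; 47; 56; 64];
 [:: 0; 1; 2; 59; 60; 61; 62; 63; 64; 65];
 [:: 9; 11; 17; 24; 34; 40; 47; 52; 65];
 [:: 6; 15; 23; 27; 34; 41; 48; 58; 63];
 [:: 6; 13; 18; 28; 31; 44; 51; 53; 61];
 [:: 4; 14; 19; 26; 33; 40; 49; 57; 61];
 [:: 4; 10; 23; 27; 33; 38; 45; 58; 61];
 [:: 9; 14; 21; 27; 36; 40; 49; 52; 64];
 [:: 9; 15; 20; 24; 35; 43; 47; 54; 61];
 [:: 5; 15; 17; 25; 33; 42; 51; 55; 64];
 [:: 9; 10; 18; 24; 32; 41; 47; 55; 59];
 [:: 5; 14; 18; 24; 37; 42; 48; 55; 62];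
 [:: 7; 11; 19; 28; 33; 43; 49; 56; 63];
 [:: 5; 16; 23; 30; 33; 39; 45; 53; 64];
 [:: 8; 15; 21; 28; 33; 43; 47; 55; 59];
 [:: 5; 16; 23; 24; 34; 40; 48; 56; 60];
 [:: 9; 11; 17; 28; 31; 44; 45; 57; 63];
 [:: 5; 10; 22; 24; 36; 39; 48; 53; 59];
 [:: 7; 12; 18; 30; 37; 44; 48; 52; 61];
 [:: 4; 16; 17; 24; 35; 43; 50; 52; 60];
 [:: 7; 14; 23; 29; 33; 41; 45; 57; 63];
 [:: 4; 16; 17; 27; 31; 39; 45; 54; 62];
 [:: 6; 13; 18; 29; 32; 38; 47; 56; 64];
 [:: 8; 10; 19; 24; 33; 44; 49; 58; 59];
 [:: 9; 13; 22; 24; 31; 38; 47; 53; 63];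
 [:: 6; 10; 21; 29; 33; 41; 47; 58; 60];
 [:: 6; 15; 23; 26; 33; 40; 45; 55; 60];
 [:: 4; 12; 21; 26; 36; 42; 49; 56; 63];
 [:: 8; 14; 22; 25; 35; 41; 45; 56; 65];
 [:: 8; 12; 17; 26; 32; 44; 48; 58; 63];
 [:: 9; 10; 18; 29; 37; 39; 48; 56; 60];
 [:: 9; 12; 23; 29; 34; 44; 48; 57; 65];
 [:: 6; 11; 20; 28; 34; 39; 51; 52; 63];
 [:: 3; 11; 23; 29; 31; 42; 46; 57; 59];
 [:: 9; 16; 19; 29; 35; 40; 48; 52; 61];
 [:: 6; 16; 22; 27; 36; 40; 48; 55; 62];
 [:: 4; 11; 22; 25; 33; 42; 46; 56; 61];
 [:: 5; 16; 23; 27; 37; 43; 50; 58; 62];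
 [:: 0; 1; 2; 3; 4; 5; 6; 7; 8; 9; 31; 32; 33; 34; 35; 36; 37; 59; 60; 61; 62; 63; 64; 65];
 [:: 8; 12; 17; 27; 33; 38; 51; 54; 59];
 [:: 4; 11; 22; 27; 35; 44; 45; 55; 60];
 [:: 5; 12; 20; 27; 36; 40; 50; 56; 59];
 [:: 8; 16; 20; 25; 32; 39; 45; 57; 63];
 [:: 6; 10; 21; 28; 32; 40; 51; 55; 64];
 [:: 9; 10; 18; 25; 33; 42; 50; 58; 62];
 [:: 7; 12; 18; 28; 35; 42; 49; 53; 62];
 [:: 8; 12; 17; 24; 37; 42; 49; 52; 64];
 [:: 6; 15; 23; 30; 37; 44; 50; 53; 65];
 [:: 3; 15; 19; 29; 32; 38; 46; 52; 62];
 [:: 5; 16; 23; 26; 36; 42; 47; 55; 59];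
 [:: 3; 12; 22; 29; 33; 41; 46; 54; 65];
 [:: 8; 13; 23; 25; 33; 42; 45; 52; 59];
 [:: 5; 13; 19; 30; 34; 42; 45; 55; 60];
 [:: 6; 13; 18; 26; 36; 42; 45; 54; 62];
 [:: 9; 13; 22; 29; 36; 43; 48; 54; 64];
 [:: 5; 12; 20; 24; 33; 44; 48; 54; 64];
 [:: 4; 14; 19; 29; 36; 43; 51; 52; 63];
 [:: 7; 12; 18; 29; 36; 43; 45; 56; 65];
 [:: 7; 12; 18; 25; 32; 39; 47; 58; 60];
 [:: 4; 10; 23; 30; 36; 41; 47; 53; 63];
 [:: 7; 13; 17; 30; 32; 43; 48; 56; 60];
 [:: 6; 14; 17; 25; 37; 40; 49; 55; 65];
 [:: 7; 10; 20; 25; 35; 41; 47; 57; 62];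
 [:: 6; 10; 21; 30; 34; 42; 50; 54; 63];
 [:: 3; 14; 20; 26; 34; 43; 51; 53; 61];
 [:: 8; 13; 23; 24; 32; 41; 49; 56; 63];
 [:: 6; 12; 19; 26; 34; 43; 45; 57; 63];
 [:: 9; 16; 19; 24; 37; 42; 47; 58; 60];
 [:: 4; 10; 23; 24; 37; 42; 50; 56; 59];
 [:: 0; 1; 2; 10; 11; 12; 13; 14; 15; 16; 24; 25; 26; 27; 28; 29; 30; 59; 60; 61; 62; 63; 64; 65];
 [:: 3; 14; 20; 24; 32; 41; 45; 54; 62];
 [:: 8; 14; 22; 27; 37; 43; 51; 55; 64];
 [:: 3; 10; 17; 30; 37; 44; 49; 56; 63];
 [:: 5; 10; 22; 26; 31; 41; 47; 52; 65];
 [:: 5; 14; 18; 29; 35; 40; 49; 56; 63];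
 [:: 6; 11; 20; 27; 33; 38; 48; 56; 60];
 [:: 7; 14; 23; 26; 37; 38; 50; 55; 61];
 [:: 4; 13; 20; 29; 34; 44; 51; 55; 64];
 [:: 3; 14; 20; 28; 36; 38; 50; 52; 60];
 [:: 6; 15; 23; 25; 32; 39; 49; 52; 64];
 [:: 4; 15; 18; 29; 31; 42; 51; 56; 62];
 [:: 6; 16; 22; 29; 31; 42; 47; 54; 61];
 [:: 8; 13; 23; 27; 35; 44; 51; 58; 65];
 [:: 3; 10; 17; 26; 33; 40; 51; 58; 65];
 [:: 9; 15; 20; 25; 36; 44; 50; 57; 64];
 [:: 3; 11; 23; 25; 34; 38; 48; 52; 61];
 [:: 0; 1; 2; 3; 4; 5; 6; 7; 8; 9; 10; 11; 12; 13; 14; 15; 16; 17; 18; 19; 20; 21; 22; 23];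
 [:: 6; 11; 20; 26; 32; 44; 45; 53; 64];
 [:: 4; 16; 17; 25; 36; 44; 46; 55; 63];
 [:: 9; 13; 22; 25; 32; 39; 50; 56; 59];
 [:: 8; 11; 18; 29; 33; 41; 50; 56; 59];
 [:: 7; 14; 23; 28; 32; 40; 49; 54; 60]].

Definition blocks67 : seq (seq nat) := [:: [:: 10; 29; 36; 63];
 [:: 9; 29; 37; 65];
 [:: 8; 29; 35; 66];
 [:: 9; 27; 36; 66];
 [:: 10; 27; 37; 64];
 [:: 9; 28; 38; 63];
 [:: 7; 27; 35; 63];
 [:: 8; 30; 37; 63];
 [:: 8; 28; 36; 64];
 [:: 8; 27; 38; 65];
 [:: 7; 28; 37; 66];
 [:: 10; 30; 38; 66];
 [:: 10; 28; 35; 65];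
 [:: 7; 29; 38; 64];
 [:: 9; 30; 35; 64];
 [:: 7; 30; 36; 65];
 [:: 16; 24; 36; 60];
 [:: 16; 23; 38; 61];
 [:: 16; 26; 37; 59];
 [:: 18; 23; 37; 60];
 [:: 17; 23; 36; 62];
 [:: 15; 25; 38; 60];
 [:: 15; 24; 37; 62];
 [:: 18; 25; 36; 59];
 [:: 17; 24; 38; 59];
 [:: 17; 25; 37; 61];
 [:: 15; 23; 35; 59];
 [:: 18; 24; 35; 61];
 [:: 17; 26; 35; 60];
 [:: 18; 26; 38; 62];
 [:: 16; 25; 35; 62];
 [:: 15; 26; 36; 61];
 [:: 54; 55; 61; 64];
 [:: 51; 55; 59; 63];
 [:: 51; 56; 61; 66];
 [:: 53; 56; 62; 63];
 [:: 53; 58; 59; 64];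
 [:: 52; 56; 60; 64];
 [:: 52; 55; 62; 65];
 [:: 52; 58; 61; 63];
 [:: 54; 57; 60; 63];
 [:: 54; 56; 59; 65];
 [:: 51; 57; 62; 64];
 [:: 52; 57; 59; 66];
 [:: 51; 58; 60; 65];
 [:: 54; 58; 62; 66];
 [:: 53; 55; 60; 66];
 [:: 53; 57; 61; 65];
 [:: 4; 28; 48; 56];
 [:: 3; 30; 48; 57];
 [:: 5; 27; 48; 58];
 [:: 4; 27; 50; 57];
 [:: 5; 29; 49; 57];
 [:: 6; 30; 50; 58];
 [:: 5; 30; 47; 56];
 [:: 6; 29; 48; 55];
 [:: 4; 30; 49; 55];
 [:: 6; 28; 47; 57];
 [:: 4; 29; 47; 58];
 [:: 6; 27; 49; 56];
 [:: 3; 27; 47; 55];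
 [:: 5; 28; 50; 55];
 [:: 3; 29; 50; 56];
 [:: 3; 28; 49; 58];
 [:: 17; 29; 41; 53];
 [:: 18; 27; 41; 52];
 [:: 17; 28; 42; 51];
 [:: 16; 30; 41; 51];
 [:: 16; 28; 40; 52];
 [:: 18; 28; 39; 53];
 [:: 15; 27; 39; 51];
 [:: 16; 27; 42; 53];
 [:: 17; 27; 40; 54];
 [:: 17; 30; 39; 52];
 [:: 15; 29; 42; 52];
 [:: 15; 30; 40; 53];
 [:: 15; 28; 41; 54];
 [:: 18; 30; 42; 54];
 [:: 18; 29; 40; 51];
 [:: 16; 29; 39; 54];
 [:: 15; 31; 47; 63];
 [:: 17; 32; 50; 63];
 [:: 15; 33; 50; 64];
 [:: 16; 33; 47; 66];
 [:: 16; 31; 50; 65];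
 [:: 16; 32; 48; 64];
 [:: 15; 32; 49; 66];
 [:: 18; 33; 48; 63];
 [:: 17; 31; 48; 66];
 [:: 17; 33; 49; 65];
 [:: 17; 34; 47; 64];
 [:: 18; 32; 47; 65];
 [:: 16; 34; 49; 63];
 [:: 18; 31; 49; 64];
 [:: 15; 34; 48; 65];
 [:: 18; 34; 50; 66];
 [:: 18; 19; 45; 56];
 [:: 17; 21; 45; 57];
 [:: 16; 21; 43; 58];
 [:: 15; 21; 46; 56];
 [:: 16; 20; 44; 56];
 [:: 16; 22; 45; 55];
 [:: 15; 19; 43; 55];
 [:: 18; 21; 44; 55];
 [:: 17; 19; 44; 58];
 [:: 18; 20; 43; 57];
 [:: 17; 20; 46; 55];
 [:: 15; 20; 45; 58];
 [:: 15; 22; 44; 57];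
 [:: 16; 19; 46; 57];
 [:: 17; 22; 43; 56];
 [:: 18; 22; 46; 58];
 [:: 4; 23; 46; 65];
 [:: 5; 26; 43; 64];
 [:: 4; 26; 45; 63];
 [:: 6; 26; 46; 66];
 [:: 6; 24; 43; 65];
 [:: 6; 23; 45; 64];
 [:: 3; 23; 43; 63];
 [:: 3; 24; 45; 66];
 [:: 5; 25; 45; 65];
 [:: 3; 26; 44; 65];
 [:: 3; 25; 46; 64];
 [:: 5; 24; 46; 63];
 [:: 4; 25; 43; 66];
 [:: 5; 23; 44; 66];
 [:: 4; 24; 44; 64];
 [:: 6; 25; 44; 63];
 [:: 37; 42; 43; 48];
 [:: 35; 41; 46; 48];
 [:: 38; 42; 46; 50];
 [:: 36; 39; 46; 49];
 [:: 35; 42; 44; 49];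
 [:: 36; 42; 45; 47];
 [:: 36; 40; 44; 48];
 [:: 37; 41; 45; 49];
 [:: 36; 41; 43; 50];
 [:: 38; 41; 44; 47];
 [:: 37; 39; 44; 50];
 [:: 35; 39; 43; 47];
 [:: 38; 39; 45; 48];
 [:: 37; 40; 46; 47];
 [:: 38; 40; 43; 49];
 [:: 35; 40; 45; 50];
 [:: 6; 31; 41; 60];
 [:: 5; 34; 39; 60];
 [:: 5; 31; 40; 62];
 [:: 6; 34; 42; 62];
 [:: 4; 33; 39; 62];
 [:: 3; 33; 42; 60];
 [:: 3; 34; 40; 61];
 [:: 5; 33; 41; 61];
 [:: 4; 32; 40; 60];
 [:: 6; 33; 40; 59];
 [:: 4; 34; 41; 59];
 [:: 6; 32; 39; 61];
 [:: 5; 32; 42; 59];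
 [:: 3; 31; 39; 59];
 [:: 3; 32; 41; 62];
 [:: 4; 31; 42; 61];
 [:: 21; 23; 28; 34];
 [:: 19; 24; 29; 34];
 [:: 20; 25; 27; 34];
 [:: 20; 24; 28; 32];
 [:: 21; 25; 29; 33];
 [:: 20; 26; 29; 31];
 [:: 21; 24; 30; 31];
 [:: 22; 26; 30; 34];
 [:: 22; 23; 29; 32];
 [:: 19; 25; 30; 32];
 [:: 19; 23; 27; 31];
 [:: 22; 25; 28; 31];
 [:: 21; 26; 27; 32];
 [:: 20; 23; 30; 33];
 [:: 22; 24; 27; 33];
 [:: 19; 26; 28; 33];
 [:: 10; 31; 45; 52];
 [:: 9; 33; 45; 53];
 [:: 10; 32; 43; 53];
 [:: 7; 31; 43; 51];
 [:: 9; 32; 46; 51];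
 [:: 8; 34; 45; 51];
 [:: 8; 31; 46; 53];
 [:: 8; 32; 44; 52];
 [:: 10; 33; 44; 51];
 [:: 10; 34; 46; 54];
 [:: 7; 34; 44; 53];
 [:: 7; 33; 46; 52];
 [:: 8; 33; 43; 54];
 [:: 7; 32; 45; 54];
 [:: 9; 34; 43; 52];
 [:: 9; 31; 44; 54];
 [:: 8; 26; 41; 55];
 [:: 8; 25; 39; 58];
 [:: 10; 26; 42; 58];
 [:: 9; 23; 40; 58];
 [:: 9; 24; 42; 55];
 [:: 9; 25; 41; 57];
 [:: 8; 24; 40; 56];
 [:: 10; 24; 39; 57];
 [:: 10; 23; 41; 56];
 [:: 7; 25; 42; 56];
 [:: 10; 25; 40; 55];
 [:: 7; 23; 39; 55];
 [:: 7; 24; 41; 58];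
 [:: 9; 26; 39; 56];
 [:: 8; 23; 42; 57];
 [:: 7; 26; 40; 57];
 [:: 12; 27; 46; 61];
 [:: 11; 28; 45; 62];
 [:: 11; 30; 44; 61];
 [:: 12; 30; 45; 59];
 [:: 13; 30; 43; 60];
 [:: 14; 30; 46; 62];
 [:: 14; 29; 44; 59];
 [:: 13; 27; 44; 62];
 [:: 13; 29; 45; 61];
 [:: 12; 29; 43; 62];
 [:: 11; 27; 43; 59];
 [:: 13; 28; 46; 59];
 [:: 14; 27; 45; 60];
 [:: 12; 28; 44; 60];
 [:: 14; 28; 43; 61];
 [:: 11; 29; 46; 60];
 [:: 14; 32; 35; 57];
 [:: 14; 33; 36; 55];
 [:: 11; 31; 35; 55];
 [:: 14; 31; 37; 56];
 [:: 13; 32; 38; 55];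
 [:: 13; 34; 35; 56];
 [:: 12; 31; 38; 57];
 [:: 11; 34; 36; 57];
 [:: 14; 34; 38; 58];
 [:: 13; 31; 36; 58];
 [:: 11; 32; 37; 58];
 [:: 13; 33; 37; 57];
 [:: 11; 33; 38; 56];
 [:: 12; 33; 35; 58];
 [:: 12; 34; 37; 55];
 [:: 12; 32; 36; 56];
 [:: 14; 21; 40; 63];
 [:: 13; 22; 39; 64];
 [:: 11; 20; 41; 66];
 [:: 14; 22; 42; 66];
 [:: 14; 19; 41; 64];
 [:: 12; 19; 42; 65];
 [:: 11; 22; 40; 65];
 [:: 11; 21; 42; 64];
 [:: 13; 19; 40; 66];
 [:: 14; 20; 39; 65];
 [:: 13; 21; 41; 65];
 [:: 12; 21; 39; 66];
 [:: 13; 20; 42; 63];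
 [:: 12; 22; 41; 63];
 [:: 12; 20; 40; 64];
 [:: 11; 19; 39; 63];
 [:: 3; 21; 38; 52];
 [:: 5; 20; 38; 51];
 [:: 5; 21; 37; 53];
 [:: 4; 21; 35; 54];
 [:: 6; 19; 37; 52];
 [:: 4; 22; 37; 51];
 [:: 6; 20; 35; 53];
 [:: 5; 19; 36; 54];
 [:: 4; 20; 36; 52];
 [:: 6; 21; 36; 51];
 [:: 3; 22; 36; 53];
 [:: 3; 19; 35; 51];
 [:: 3; 20; 37; 54];
 [:: 5; 22; 35; 52];
 [:: 6; 22; 38; 54];
 [:: 4; 19; 38; 53];
 [:: 7; 19; 47; 59];
 [:: 10; 21; 48; 59];
 [:: 7; 20; 49; 62];
 [:: 9; 19; 48; 62];
 [:: 9; 22; 47; 60];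
 [:: 9; 20; 50; 59];
 [:: 10; 19; 49; 60];
 [:: 10; 22; 50; 62];
 [:: 7; 22; 48; 61];
 [:: 7; 21; 50; 60];
 [:: 9; 21; 49; 61];
 [:: 10; 20; 47; 61];
 [:: 8; 19; 50; 61];
 [:: 8; 21; 47; 62];
 [:: 8; 22; 49; 59];
 [:: 8; 20; 48; 60];
 [:: 3; 8; 13; 18];
 [:: 4; 7; 14; 17];
 [:: 6; 9; 12; 15];
 [:: 4; 9; 11; 18];
 [:: 5; 10; 11; 16];
 [:: 6; 7; 13; 16];
 [:: 6; 10; 14; 18];
 [:: 3; 10; 12; 17];
 [:: 3; 9; 14; 16];
 [:: 5; 7; 12; 18];
 [:: 5; 9; 13; 17];
 [:: 4; 10; 13; 15];
 [:: 5; 8; 14; 15];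
 [:: 4; 8; 12; 16];
 [:: 6; 8; 11; 17];
 [:: 3; 7; 11; 15];
 [:: 11; 25; 50; 52];
 [:: 11; 23; 47; 51];
 [:: 14; 23; 49; 52];
 [:: 12; 25; 47; 54];
 [:: 13; 26; 47; 52];
 [:: 11; 24; 49; 54];
 [:: 12; 23; 50; 53];
 [:: 11; 26; 48; 53];
 [:: 14; 25; 48; 51];
 [:: 14; 26; 50; 54];
 [:: 13; 25; 49; 53];
 [:: 13; 23; 48; 54];
 [:: 13; 24; 50; 51];
 [:: 12; 26; 49; 51];
 [:: 12; 24; 48; 52];
 [:: 14; 24; 47; 53];
 [:: 0; 1; 2];
 [:: 0; 3; 4];
 [:: 0; 5; 6];
 [:: 1; 3; 5];
 [:: 1; 4; 6];
 [:: 2; 3; 6];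
 [:: 2; 4; 5];
 [:: 0; 7; 8];
 [:: 0; 9; 10];
 [:: 1; 7; 9];
 [:: 1; 8; 10];
 [:: 2; 7; 10];
 [:: 2; 8; 9];
 [:: 0; 11; 12];
 [:: 0; 13; 14];
 [:: 1; 11; 13];
 [:: 1; 12; 14];
 [:: 2; 11; 14];
 [:: 2; 12; 13];
 [:: 0; 15; 16];
 [:: 0; 17; 18];
 [:: 1; 15; 17];
 [:: 1; 16; 18];
 [:: 2; 15; 18];
 [:: 2; 16; 17];
 [:: 0; 19; 20];
 [:: 0; 21; 22];
 [:: 1; 19; 21];
 [:: 1; 20; 22];
 [:: 2; 19; 22];
 [:: 2; 20; 21];
 [:: 0; 23; 24];
 [:: 0; 25; 26];
 [:: 1; 23; 25];
 [:: 1; 24; 26];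
 [:: 2; 23; 26];
 [:: 2; 24; 25];
 [:: 0; 27; 28];
 [:: 0; 29; 30];
 [:: 1; 27; 29];
 [:: 1; 28; 30];
 [:: 2; 27; 30];
 [:: 2; 28; 29];
 [:: 0; 31; 32];
 [:: 0; 33; 34];
 [:: 1; 31; 33];
 [:: 1; 32; 34];
 [:: 2; 31; 34];
 [:: 2; 32; 33];
 [:: 0; 35; 36];
 [:: 0; 37; 38];
 [:: 1; 35; 37];
 [:: 1; 36; 38];
 [:: 2; 35; 38];
 [:: 2; 36; 37];
 [:: 0; 39; 40];
 [:: 0; 41; 42];
 [:: 1; 39; 41];
 [:: 1; 40; 42];
 [:: 2; 39; 42];
 [:: 2; 40; 41];
 [:: 0; 43; 44];
 [:: 0; 45; 46];
 [:: 1; 43; 45];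
 [:: 1; 44; 46];
 [:: 2; 43; 46];
 [:: 2; 44; 45];
 [:: 0; 47; 48];
 [:: 0; 49; 50];
 [:: 1; 47; 49];
 [:: 1; 48; 50];
 [:: 2; 47; 50];
 [:: 2; 48; 49];
 [:: 0; 51; 52];
 [:: 0; 53; 54];
 [:: 1; 51; 53];
 [:: 1; 52; 54];
 [:: 2; 51; 54];
 [:: 2; 52; 53];
 [:: 0; 55; 56];
 [:: 0; 57; 58];
 [:: 1; 55; 57];
 [:: 1; 56; 58];
 [:: 2; 55; 58];
 [:: 2; 56; 57];
 [:: 0; 59; 60];
 [:: 0; 61; 62];
 [:: 1; 59; 61];
 [:: 1; 60; 62];
 [:: 2; 59; 62];
 [:: 2; 60; 61];
 [:: 0; 63; 64];
 [:: 0; 65; 66];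
 [:: 1; 63; 65];
 [:: 1; 64; 66];
 [:: 2; 63; 66];
 [:: 2; 64; 65]].
Definition flats67 : seq (seq nat) := [:: [:: 0; 1; 2; 27; 28; 29; 30];
 [:: 5; 8; 14; 15; 20; 25; 27; 34; 38; 39; 45; 48; 51; 58; 60; 65];
 [:: 6; 10; 14; 18; 21; 25; 29; 33; 36; 40; 44; 48; 51; 55; 59; 63];
 [:: 4; 7; 14; 17; 21; 26; 27; 32; 35; 40; 45; 50; 54; 57; 60; 63];
 [:: 5; 7; 12; 18; 21; 23; 28; 34; 37; 39; 44; 50; 53; 55; 60; 66];
 [:: 5; 9; 13; 17; 22; 26; 30; 34; 35; 39; 43; 47; 52; 56; 60; 64];
 [:: 0; 1; 2; 3; 4; 5; 6; 19; 20; 21; 22; 35; 36; 37; 38; 51; 52; 53; 54];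
 [:: 0; 1; 2; 7; 8; 9; 10; 19; 20; 21; 22; 47; 48; 49; 50; 59; 60; 61; 62];
 [:: 0; 1; 2; 11; 12; 13; 14; 23; 24; 25; 26; 47; 48; 49; 50; 51; 52; 53; 54];
 [:: 0; 1; 2; 19; 20; 21; 22; 23; 24; 25; 26; 27; 28; 29; 30; 31; 32; 33; 34];
 [:: 6; 7; 13; 16; 21; 24; 30; 31; 36; 41; 43; 50; 51; 58; 60; 65];
 [:: 5; 9; 13; 17; 21; 25; 29; 33; 37; 41; 45; 49; 53; 57; 61; 65];
 [:: 4; 7; 14; 17; 22; 25; 28; 31; 37; 42; 43; 48; 51; 56; 61; 66];
 [:: 3; 8; 13; 18; 21; 26; 27; 32; 38; 41; 44; 47; 52; 55; 62; 65];
 [:: 4; 9; 11; 18; 19; 26; 28; 33; 38; 39; 45; 48; 53; 56; 62; 63];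
 [:: 0; 1; 2; 11; 12; 13; 14; 27; 28; 29; 30; 43; 44; 45; 46; 59; 60; 61; 62];
 [:: 0; 1; 2; 3; 4; 5; 6];
 [:: 3; 7; 11; 15; 20; 24; 28; 32; 37; 41; 45; 49; 54; 58; 62; 66];
 [:: 3; 8; 13; 18; 19; 24; 29; 34; 35; 40; 45; 50; 51; 56; 61; 66];
 [:: 0; 1; 2; 3; 4; 5; 6; 31; 32; 33; 34; 39; 40; 41; 42; 59; 60; 61; 62];
 [:: 3; 10; 12; 17; 19; 26; 28; 33; 35; 42; 44; 49; 51; 58; 60; 65];
 [:: 0; 1; 2; 15; 16; 17; 18; 27; 28; 29; 30; 39; 40; 41; 42; 51; 52; 53; 54];
 [:: 4; 10; 13; 15; 19; 25; 30; 32; 38; 40; 43; 49; 53; 55; 60; 66];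
 [:: 4; 9; 11; 18; 20; 25; 27; 34; 36; 41; 43; 50; 52; 57; 59; 66];
 [:: 6; 9; 12; 15; 20; 23; 30; 33; 35; 40; 45; 50; 53; 58; 59; 64];
 [:: 0; 1; 2; 39; 40; 41; 42];
 [:: 0; 1; 2; 3; 4; 5; 6; 7; 8; 9; 10; 11; 12; 13; 14; 15; 16; 17; 18];
 [:: 6; 10; 14; 18; 19; 23; 27; 31; 37; 41; 45; 49; 52; 56; 60; 64];
 [:: 3; 9; 14; 16; 19; 25; 30; 32; 35; 41; 46; 48; 51; 57; 62; 64];
 [:: 0; 1; 2; 19; 20; 21; 22];
 [:: 4; 8; 12; 16; 22; 26; 30; 34; 37; 41; 45; 49; 51; 55; 59; 63];
 [:: 3; 9; 14; 16; 20; 26; 29; 31; 37; 39; 44; 50; 54; 56; 59; 65];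
 [:: 6; 10; 14; 18; 22; 26; 30; 34; 38; 42; 46; 50; 54; 58; 62; 66];
 [:: 6; 9; 12; 15; 21; 26; 27; 32; 36; 39; 46; 49; 51; 56; 61; 66];
 [:: 0; 1; 2; 3; 4; 5; 6; 23; 24; 25; 26; 43; 44; 45; 46; 63; 64; 65; 66];
 [:: 5; 10; 11; 16; 22; 25; 28; 31; 35; 40; 45; 50; 52; 55; 62; 65];
 [:: 0; 1; 2; 59; 60; 61; 62];
 [:: 4; 9; 11; 18; 22; 23; 29; 32; 37; 40; 46; 47; 51; 58; 60; 65];
 [:: 0; 1; 2; 15; 16; 17; 18; 19; 20; 21; 22; 43; 44; 45; 46; 55; 56; 57; 58];
 [:: 3; 7; 11; 15; 19; 23; 27; 31; 35; 39; 43; 47; 51; 55; 59; 63];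
 [:: 3; 7; 11; 15; 21; 25; 29; 33; 38; 42; 46; 50; 52; 56; 60; 64];
 [:: 0; 1; 2; 35; 36; 37; 38];
 [:: 6; 8; 11; 17; 22; 24; 27; 33; 38; 40; 43; 49; 54; 56; 59; 65];
 [:: 3; 9; 14; 16; 21; 23; 28; 34; 38; 40; 43; 49; 52; 58; 61; 63];
 [:: 0; 1; 2; 15; 16; 17; 18; 31; 32; 33; 34; 47; 48; 49; 50; 63; 64; 65; 66];
 [:: 4; 10; 13; 15; 21; 23; 28; 34; 35; 41; 46; 48; 54; 56; 59; 65];
 [:: 5; 10; 11; 16; 20; 23; 30; 33; 38; 41; 44; 47; 51; 56; 61; 66];
 [:: 0; 1; 2; 51; 52; 53; 54; 55; 56; 57; 58; 59; 60; 61; 62; 63; 64; 65; 66];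
 [:: 5; 9; 13; 17; 19; 23; 27; 31; 36; 40; 44; 48; 54; 58; 62; 66];
 [:: 0; 1; 2; 23; 24; 25; 26];
 [:: 6; 9; 12; 15; 19; 24; 29; 34; 37; 42; 43; 48; 52; 55; 62; 65];
 [:: 3; 10; 12; 17; 22; 23; 29; 32; 36; 41; 43; 50; 53; 56; 62; 63];
 [:: 4; 8; 12; 16; 20; 24; 28; 32; 36; 40; 44; 48; 52; 56; 60; 64];
 [:: 0; 1; 2; 35; 36; 37; 38; 39; 40; 41; 42; 43; 44; 45; 46; 47; 48; 49; 50];
 [:: 5; 10; 11; 16; 19; 24; 29; 34; 36; 39; 46; 49; 54; 57; 60; 63];
 [:: 6; 7; 13; 16; 19; 26; 28; 33; 37; 40; 46; 47; 52; 57; 59; 66];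
 [:: 0; 1; 2; 3; 4; 5; 6; 27; 28; 29; 30; 47; 48; 49; 50; 55; 56; 57; 58];
 [:: 0; 1; 2; 7; 8; 9; 10; 23; 24; 25; 26; 39; 40; 41; 42; 55; 56; 57; 58];
 [:: 0; 1; 2; 51; 52; 53; 54];
 [:: 4; 10; 13; 15; 20; 26; 29; 31; 36; 42; 45; 47; 52; 58; 61; 63];
 [:: 4; 10; 13; 15; 22; 24; 27; 33; 37; 39; 44; 50; 51; 57; 62; 64];
 [:: 5; 9; 13; 17; 20; 24; 28; 32; 38; 42; 46; 50; 51; 55; 59; 63];
 [:: 6; 9; 12; 15; 22; 25; 28; 31; 38; 41; 44; 47; 54; 57; 60; 63];
 [:: 0; 1; 2];
 [:: 4; 7; 14; 17; 19; 24; 29; 34; 38; 41; 44; 47; 53; 58; 59; 64];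
 [:: 0; 1; 2; 43; 44; 45; 46];
 [:: 5; 8; 14; 15; 22; 23; 29; 32; 35; 42; 44; 49; 52; 57; 59; 66];
 [:: 6; 7; 13; 16; 22; 23; 29; 32; 38; 39; 45; 48; 54; 55; 61; 64];
 [:: 4; 8; 12; 16; 19; 23; 27; 31; 38; 42; 46; 50; 53; 57; 61; 65];
 [:: 5; 7; 12; 18; 19; 25; 30; 32; 36; 42; 45; 47; 54; 56; 59; 65];
 [:: 0; 1; 2; 7; 8; 9; 10];
 [:: 5; 8; 14; 15; 21; 24; 30; 31; 37; 40; 46; 47; 53; 56; 62; 63];
 [:: 4; 9; 11; 18; 21; 24; 30; 31; 35; 42; 44; 49; 54; 55; 61; 64];
 [:: 0; 1; 2; 7; 8; 9; 10; 31; 32; 33; 34; 43; 44; 45; 46; 51; 52; 53; 54];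
 [:: 3; 7; 11; 15; 22; 26; 30; 34; 36; 40; 44; 48; 53; 57; 61; 65];
 [:: 0; 1; 2; 11; 12; 13; 14; 19; 20; 21; 22; 39; 40; 41; 42; 63; 64; 65; 66];
 [:: 0; 1; 2; 11; 12; 13; 14; 31; 32; 33; 34; 35; 36; 37; 38; 55; 56; 57; 58];
 [:: 0; 1; 2; 7; 8; 9; 10; 27; 28; 29; 30; 35; 36; 37; 38; 63; 64; 65; 66];
 [:: 6; 10; 14; 18; 20; 24; 28; 32; 35; 39; 43; 47; 53; 57; 61; 65];
 [:: 3; 10; 12; 17; 20; 25; 27; 34; 37; 40; 46; 47; 54; 55; 61; 64];
 [:: 5; 10; 11; 16; 21; 26; 27; 32; 37; 42; 43; 48; 53; 58; 59; 64];
 [:: 6; 8; 11; 17; 21; 23; 28; 34; 36; 42; 45; 47; 51; 57; 62; 64];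
 [:: 0; 1; 2; 63; 64; 65; 66];
 [:: 6; 8; 11; 17; 20; 26; 29; 31; 35; 41; 46; 48; 53; 55; 60; 66];
 [:: 4; 8; 12; 16; 21; 25; 29; 33; 35; 39; 43; 47; 54; 58; 62; 66];
 [:: 3; 10; 12; 17; 21; 24; 30; 31; 38; 39; 45; 48; 52; 57; 59; 66];
 [:: 0; 1; 2; 15; 16; 17; 18; 23; 24; 25; 26; 35; 36; 37; 38; 59; 60; 61; 62];
 [:: 3; 8; 13; 18; 20; 23; 30; 33; 37; 42; 43; 48; 54; 57; 60; 63];
 [:: 6; 7; 13; 16; 20; 25; 27; 34; 35; 42; 44; 49; 53; 56; 62; 63];
 [:: 0; 1; 2; 11; 12; 13; 14];
 [:: 0; 1; 2; 15; 16; 17; 18];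
 [:: 0; 1; 2; 47; 48; 49; 50];
 [:: 3; 8; 13; 18; 22; 25; 28; 31; 36; 39; 46; 49; 53; 58; 59; 64];
 [:: 0; 1; 2; 55; 56; 57; 58];
 [:: 6; 8; 11; 17; 19; 25; 30; 32; 37; 39; 44; 50; 52; 58; 61; 63];
 [:: 5; 8; 14; 15; 19; 26; 28; 33; 36; 41; 43; 50; 54; 55; 61; 64];
 [:: 0; 1; 2; 31; 32; 33; 34];
 [:: 5; 7; 12; 18; 22; 24; 27; 33; 35; 41; 46; 48; 52; 58; 61; 63];
 [:: 5; 7; 12; 18; 20; 26; 29; 31; 38; 40; 43; 49; 51; 57; 62; 64];
 [:: 3; 9; 14; 16; 22; 24; 27; 33; 36; 42; 45; 47; 53; 55; 60; 66];
 [:: 4; 7; 14; 17; 20; 23; 30; 33; 36; 39; 46; 49; 52; 55; 62; 65]].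

Definition blocks76 : seq (seq nat) := [:: [:: 0; 1; 2; 3];
 [:: 67; 0; 4];
 [:: 67; 8; 12];
 [:: 68; 0; 8];
 [:: 68; 4; 12];
 [:: 69; 0; 12];
 [:: 69; 4; 8];
 [:: 0; 5; 10; 15];
 [:: 0; 6; 11; 13];
 [:: 0; 7; 9; 14];
 [:: 64; 0; 16];
 [:: 64; 32; 48];
 [:: 65; 0; 32];
 [:: 65; 16; 48];
 [:: 66; 0; 48];
 [:: 66; 16; 32];
 [:: 0; 17; 34; 51];
 [:: 0; 18; 35; 49];
 [:: 0; 19; 33; 50];
 [:: 70; 0; 20];
 [:: 70; 40; 60];
 [:: 71; 0; 40];
 [:: 71; 20; 60];
 [:: 72; 0; 60];
 [:: 72; 20; 40];
 [:: 0; 21; 42; 63];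
 [:: 0; 22; 43; 61];
 [:: 0; 23; 41; 62];
 [:: 73; 0; 24];
 [:: 73; 44; 52];
 [:: 74; 0; 44];
 [:: 74; 24; 52];
 [:: 75; 0; 52];
 [:: 75; 24; 44];
 [:: 0; 25; 46; 55];
 [:: 0; 26; 47; 53];
 [:: 0; 27; 45; 54];
 [:: 0; 28; 36; 56];
 [:: 0; 29; 38; 59];
 [:: 0; 30; 39; 57];
 [:: 0; 31; 37; 58];
 [:: 1; 4; 11; 14];
 [:: 67; 1; 5];
 [:: 67; 9; 13];
 [:: 68; 1; 9];
 [:: 68; 5; 13];
 [:: 69; 1; 13];
 [:: 69; 5; 9];
 [:: 1; 6; 8; 15];
 [:: 1; 7; 10; 12];
 [:: 1; 16; 35; 50];
 [:: 64; 1; 17];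
 [:: 64; 33; 49];
 [:: 65; 1; 33];
 [:: 65; 17; 49];
 [:: 66; 1; 49];
 [:: 66; 17; 33];
 [:: 1; 18; 32; 51];
 [:: 1; 19; 34; 48];
 [:: 1; 20; 43; 62];
 [:: 70; 1; 21];
 [:: 70; 41; 61];
 [:: 71; 1; 41];
 [:: 71; 21; 61];
 [:: 72; 1; 61];
 [:: 72; 21; 41];
 [:: 1; 22; 40; 63];
 [:: 1; 23; 42; 60];
 [:: 1; 24; 47; 54];
 [:: 73; 1; 25];
 [:: 73; 45; 53];
 [:: 74; 1; 45];
 [:: 74; 25; 53];
 [:: 75; 1; 53];
 [:: 75; 25; 45];
 [:: 1; 26; 44; 55];
 [:: 1; 27; 46; 52];
 [:: 1; 28; 39; 58];
 [:: 1; 29; 37; 57];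
 [:: 1; 30; 36; 59];
 [:: 1; 31; 38; 56];
 [:: 2; 4; 9; 15];
 [:: 2; 5; 11; 12];
 [:: 67; 2; 6];
 [:: 67; 10; 14];
 [:: 68; 2; 10];
 [:: 68; 6; 14];
 [:: 69; 2; 14];
 [:: 69; 6; 10];
 [:: 2; 7; 8; 13];
 [:: 2; 16; 33; 51];
 [:: 2; 17; 35; 48];
 [:: 64; 2; 18];
 [:: 64; 34; 50];
 [:: 65; 2; 34];
 [:: 65; 18; 50];
 [:: 66; 2; 50];
 [:: 66; 18; 34];
 [:: 2; 19; 32; 49];
 [:: 2; 20; 41; 63];
 [:: 2; 21; 43; 60];
 [:: 70; 2; 22];
 [:: 70; 42; 62];
 [:: 71; 2; 42];
 [:: 71; 22; 62];
 [:: 72; 2; 62];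
 [:: 72; 22; 42];
 [:: 2; 23; 40; 61];
 [:: 2; 24; 45; 55];
 [:: 2; 25; 47; 52];
 [:: 73; 2; 26];
 [:: 73; 46; 54];
 [:: 74; 2; 46];
 [:: 74; 26; 54];
 [:: 75; 2; 54];
 [:: 75; 26; 46];
 [:: 2; 27; 44; 53];
 [:: 2; 28; 37; 59];
 [:: 2; 29; 39; 56];
 [:: 2; 30; 38; 58];
 [:: 2; 31; 36; 57];
 [:: 3; 4; 10; 13];
 [:: 3; 5; 8; 14];
 [:: 3; 6; 9; 12];
 [:: 67; 3; 7];
 [:: 67; 11; 15];
 [:: 68; 3; 11];
 [:: 68; 7; 15];
 [:: 69; 3; 15];
 [:: 69; 7; 11];
 [:: 3; 16; 34; 49];
 [:: 3; 17; 32; 50];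
 [:: 3; 18; 33; 48];
 [:: 64; 3; 19];
 [:: 64; 35; 51];
 [:: 65; 3; 35];
 [:: 65; 19; 51];
 [:: 66; 3; 51];
 [:: 66; 19; 35];
 [:: 3; 20; 42; 61];
 [:: 3; 21; 40; 62];
 [:: 3; 22; 41; 60];
 [:: 70; 3; 23];
 [:: 70; 43; 63];
 [:: 71; 3; 43];
 [:: 71; 23; 63];
 [:: 72; 3; 63];
 [:: 72; 23; 43];
 [:: 3; 24; 46; 53];
 [:: 3; 25; 44; 54];
 [:: 3; 26; 45; 52];
 [:: 73; 3; 27];
 [:: 73; 47; 55];
 [:: 74; 3; 47];
 [:: 74; 27; 55];
 [:: 75; 3; 55];
 [:: 75; 27; 47];
 [:: 3; 28; 38; 57];
 [:: 3; 29; 36; 58];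
 [:: 3; 30; 37; 56];
 [:: 3; 31; 39; 59];
 [:: 4; 5; 6; 7];
 [:: 70; 4; 16];
 [:: 70; 44; 56];
 [:: 71; 4; 44];
 [:: 71; 16; 56];
 [:: 72; 4; 56];
 [:: 72; 16; 44];
 [:: 4; 17; 46; 59];
 [:: 4; 18; 47; 57];
 [:: 4; 19; 45; 58];
 [:: 64; 4; 20];
 [:: 64; 36; 52];
 [:: 65; 4; 36];
 [:: 65; 20; 52];
 [:: 66; 4; 52];
 [:: 66; 20; 36];
 [:: 4; 21; 38; 55];
 [:: 4; 22; 39; 53];
 [:: 4; 23; 37; 54];
 [:: 4; 24; 32; 60];
 [:: 4; 25; 34; 63];
 [:: 4; 26; 35; 61];
 [:: 4; 27; 33; 62];
 [:: 73; 4; 28];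
 [:: 73; 40; 48];
 [:: 74; 4; 40];
 [:: 74; 28; 48];
 [:: 75; 4; 48];
 [:: 75; 28; 40];
 [:: 4; 29; 42; 51];
 [:: 4; 30; 43; 49];
 [:: 4; 31; 41; 50];
 [:: 5; 16; 47; 58];
 [:: 70; 5; 17];
 [:: 70; 45; 57];
 [:: 71; 5; 45];
 [:: 71; 17; 57];
 [:: 72; 5; 57];
 [:: 72; 17; 45];
 [:: 5; 18; 44; 59];
 [:: 5; 19; 46; 56];
 [:: 5; 20; 39; 54];
 [:: 64; 5; 21];
 [:: 64; 37; 53];
 [:: 65; 5; 37];
 [:: 65; 21; 53];
 [:: 66; 5; 53];
 [:: 66; 21; 37];
 [:: 5; 22; 36; 55];
 [:: 5; 23; 38; 52];
 [:: 5; 24; 35; 62];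
 [:: 5; 25; 33; 61];
 [:: 5; 26; 32; 63];
 [:: 5; 27; 34; 60];
 [:: 5; 28; 43; 50];
 [:: 73; 5; 29];
 [:: 73; 41; 49];
 [:: 74; 5; 41];
 [:: 74; 29; 49];
 [:: 75; 5; 49];
 [:: 75; 29; 41];
 [:: 5; 30; 40; 51];
 [:: 5; 31; 42; 48];
 [:: 6; 16; 45; 59];
 [:: 6; 17; 47; 56];
 [:: 70; 6; 18];
 [:: 70; 46; 58];
 [:: 71; 6; 46];
 [:: 71; 18; 58];
 [:: 72; 6; 58];
 [:: 72; 18; 46];
 [:: 6; 19; 44; 57];
 [:: 6; 20; 37; 55];
 [:: 6; 21; 39; 52];
 [:: 64; 6; 22];
 [:: 64; 38; 54];
 [:: 65; 6; 38];
 [:: 65; 22; 54];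
 [:: 66; 6; 54];
 [:: 66; 22; 38];
 [:: 6; 23; 36; 53];
 [:: 6; 24; 33; 63];
 [:: 6; 25; 35; 60];
 [:: 6; 26; 34; 62];
 [:: 6; 27; 32; 61];
 [:: 6; 28; 41; 51];
 [:: 6; 29; 43; 48];
 [:: 73; 6; 30];
 [:: 73; 42; 50];
 [:: 74; 6; 42];
 [:: 74; 30; 50];
 [:: 75; 6; 50];
 [:: 75; 30; 42];
 [:: 6; 31; 40; 49];
 [:: 7; 16; 46; 57];
 [:: 7; 17; 44; 58];
 [:: 7; 18; 45; 56];
 [:: 70; 7; 19];
 [:: 70; 47; 59];
 [:: 71; 7; 47];
 [:: 71; 19; 59];
 [:: 72; 7; 59];
 [:: 72; 19; 47];
 [:: 7; 20; 38; 53];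
 [:: 7; 21; 36; 54];
 [:: 7; 22; 37; 52];
 [:: 64; 7; 23];
 [:: 64; 39; 55];
 [:: 65; 7; 39];
 [:: 65; 23; 55];
 [:: 66; 7; 55];
 [:: 66; 23; 39];
 [:: 7; 24; 34; 61];
 [:: 7; 25; 32; 62];
 [:: 7; 26; 33; 60];
 [:: 7; 27; 35; 63];
 [:: 7; 28; 42; 49];
 [:: 7; 29; 40; 50];
 [:: 7; 30; 41; 48];
 [:: 73; 7; 31];
 [:: 73; 43; 51];
 [:: 74; 7; 43];
 [:: 74; 31; 51];
 [:: 75; 7; 51];
 [:: 75; 31; 43];
 [:: 8; 9; 10; 11];
 [:: 73; 8; 16];
 [:: 73; 36; 60];
 [:: 74; 8; 36];
 [:: 74; 16; 60];
 [:: 75; 8; 60];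
 [:: 75; 16; 36];
 [:: 8; 17; 38; 63];
 [:: 8; 18; 39; 61];
 [:: 8; 19; 37; 62];
 [:: 8; 20; 44; 48];
 [:: 8; 21; 46; 51];
 [:: 8; 22; 47; 49];
 [:: 8; 23; 45; 50];
 [:: 64; 8; 24];
 [:: 64; 40; 56];
 [:: 65; 8; 40];
 [:: 65; 24; 56];
 [:: 66; 8; 56];
 [:: 66; 24; 40];
 [:: 8; 25; 42; 59];
 [:: 8; 26; 43; 57];
 [:: 8; 27; 41; 58];
 [:: 70; 8; 28];
 [:: 70; 32; 52];
 [:: 71; 8; 32];
 [:: 71; 28; 52];
 [:: 72; 8; 52];
 [:: 72; 28; 32];
 [:: 8; 29; 34; 55];
 [:: 8; 30; 35; 53];
 [:: 8; 31; 33; 54];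
 [:: 9; 16; 39; 62];
 [:: 73; 9; 17];
 [:: 73; 37; 61];
 [:: 74; 9; 37];
 [:: 74; 17; 61];
 [:: 75; 9; 61];
 [:: 75; 17; 37];
 [:: 9; 18; 36; 63];
 [:: 9; 19; 38; 60];
 [:: 9; 20; 47; 50];
 [:: 9; 21; 45; 49];
 [:: 9; 22; 44; 51];
 [:: 9; 23; 46; 48];
 [:: 9; 24; 43; 58];
 [:: 64; 9; 25];
 [:: 64; 41; 57];
 [:: 65; 9; 41];
 [:: 65; 25; 57];
 [:: 66; 9; 57];
 [:: 66; 25; 41];
 [:: 9; 26; 40; 59];
 [:: 9; 27; 42; 56];
 [:: 9; 28; 35; 54];
 [:: 70; 9; 29];
 [:: 70; 33; 53];
 [:: 71; 9; 33];
 [:: 71; 29; 53];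
 [:: 72; 9; 53];
 [:: 72; 29; 33];
 [:: 9; 30; 32; 55];
 [:: 9; 31; 34; 52];
 [:: 10; 16; 37; 63];
 [:: 10; 17; 39; 60];
 [:: 73; 10; 18];
 [:: 73; 38; 62];
 [:: 74; 10; 38];
 [:: 74; 18; 62];
 [:: 75; 10; 62];
 [:: 75; 18; 38];
 [:: 10; 19; 36; 61];
 [:: 10; 20; 45; 51];
 [:: 10; 21; 47; 48];
 [:: 10; 22; 46; 50];
 [:: 10; 23; 44; 49];
 [:: 10; 24; 41; 59];
 [:: 10; 25; 43; 56];
 [:: 64; 10; 26];
 [:: 64; 42; 58];
 [:: 65; 10; 42];
 [:: 65; 26; 58];
 [:: 66; 10; 58];
 [:: 66; 26; 42];
 [:: 10; 27; 40; 57];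
 [:: 10; 28; 33; 55];
 [:: 10; 29; 35; 52];
 [:: 70; 10; 30];
 [:: 70; 34; 54];
 [:: 71; 10; 34];
 [:: 71; 30; 54];
 [:: 72; 10; 54];
 [:: 72; 30; 34];
 [:: 10; 31; 32; 53];
 [:: 11; 16; 38; 61];
 [:: 11; 17; 36; 62];
 [:: 11; 18; 37; 60];
 [:: 73; 11; 19];
 [:: 73; 39; 63];
 [:: 74; 11; 39];
 [:: 74; 19; 63];
 [:: 75; 11; 63];
 [:: 75; 19; 39];
 [:: 11; 20; 46; 49];
 [:: 11; 21; 44; 50];
 [:: 11; 22; 45; 48];
 [:: 11; 23; 47; 51];
 [:: 11; 24; 42; 57];
 [:: 11; 25; 40; 58];
 [:: 11; 26; 41; 56];
 [:: 64; 11; 27];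
 [:: 64; 43; 59];
 [:: 65; 11; 43];
 [:: 65; 27; 59];
 [:: 66; 11; 59];
 [:: 66; 27; 43];
 [:: 11; 28; 34; 53];
 [:: 11; 29; 32; 54];
 [:: 11; 30; 33; 52];
 [:: 70; 11; 31];
 [:: 70; 35; 55];
 [:: 71; 11; 35];
 [:: 71; 31; 55];
 [:: 72; 11; 55];
 [:: 72; 31; 35];
 [:: 12; 13; 14; 15];
 [:: 12; 16; 40; 52];
 [:: 12; 17; 42; 55];
 [:: 12; 18; 43; 53];
 [:: 12; 19; 41; 54];
 [:: 73; 12; 20];
 [:: 73; 32; 56];
 [:: 74; 12; 32];
 [:: 74; 20; 56];
 [:: 75; 12; 56];
 [:: 75; 20; 32];
 [:: 12; 21; 34; 59];
 [:: 12; 22; 35; 57];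
 [:: 12; 23; 33; 58];
 [:: 70; 12; 24];
 [:: 70; 36; 48];
 [:: 71; 12; 36];
 [:: 71; 24; 48];
 [:: 72; 12; 48];
 [:: 72; 24; 36];
 [:: 12; 25; 38; 51];
 [:: 12; 26; 39; 49];
 [:: 12; 27; 37; 50];
 [:: 64; 12; 28];
 [:: 64; 44; 60];
 [:: 65; 12; 44];
 [:: 65; 28; 60];
 [:: 66; 12; 60];
 [:: 66; 28; 44];
 [:: 12; 29; 46; 63];
 [:: 12; 30; 47; 61];
 [:: 12; 31; 45; 62];
 [:: 13; 16; 43; 54];
 [:: 13; 17; 41; 53];
 [:: 13; 18; 40; 55];
 [:: 13; 19; 42; 52];
 [:: 13; 20; 35; 58];
 [:: 73; 13; 21];
 [:: 73; 33; 57];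
 [:: 74; 13; 33];
 [:: 74; 21; 57];
 [:: 75; 13; 57];
 [:: 75; 21; 33];
 [:: 13; 22; 32; 59];
 [:: 13; 23; 34; 56];
 [:: 13; 24; 39; 50];
 [:: 70; 13; 25];
 [:: 70; 37; 49];
 [:: 71; 13; 37];
 [:: 71; 25; 49];
 [:: 72; 13; 49];
 [:: 72; 25; 37];
 [:: 13; 26; 36; 51];
 [:: 13; 27; 38; 48];
 [:: 13; 28; 47; 62];
 [:: 64; 13; 29];
 [:: 64; 45; 61];
 [:: 65; 13; 45];
 [:: 65; 29; 61];
 [:: 66; 13; 61];
 [:: 66; 29; 45];
 [:: 13; 30; 44; 63];
 [:: 13; 31; 46; 60];
 [:: 14; 16; 41; 55];
 [:: 14; 17; 43; 52];
 [:: 14; 18; 42; 54];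
 [:: 14; 19; 40; 53];
 [:: 14; 20; 33; 59];
 [:: 14; 21; 35; 56];
 [:: 73; 14; 22];
 [:: 73; 34; 58];
 [:: 74; 14; 34];
 [:: 74; 22; 58];
 [:: 75; 14; 58];
 [:: 75; 22; 34];
 [:: 14; 23; 32; 57];
 [:: 14; 24; 37; 51];
 [:: 14; 25; 39; 48];
 [:: 70; 14; 26];
 [:: 70; 38; 50];
 [:: 71; 14; 38];
 [:: 71; 26; 50];
 [:: 72; 14; 50];
 [:: 72; 26; 38];
 [:: 14; 27; 36; 49];
 [:: 14; 28; 45; 63];
 [:: 14; 29; 47; 60];
 [:: 64; 14; 30];
 [:: 64; 46; 62];
 [:: 65; 14; 46];
 [:: 65; 30; 62];
 [:: 66; 14; 62];
 [:: 66; 30; 46];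
 [:: 14; 31; 44; 61];
 [:: 15; 16; 42; 53];
 [:: 15; 17; 40; 54];
 [:: 15; 18; 41; 52];
 [:: 15; 19; 43; 55];
 [:: 15; 20; 34; 57];
 [:: 15; 21; 32; 58];
 [:: 15; 22; 33; 56];
 [:: 73; 15; 23];
 [:: 73; 35; 59];
 [:: 74; 15; 35];
 [:: 74; 23; 59];
 [:: 75; 15; 59];
 [:: 75; 23; 35];
 [:: 15; 24; 38; 49];
 [:: 15; 25; 36; 50];
 [:: 15; 26; 37; 48];
 [:: 70; 15; 27];
 [:: 70; 39; 51];
 [:: 71; 15; 39];
 [:: 71; 27; 51];
 [:: 72; 15; 51];
 [:: 72; 27; 39];
 [:: 15; 28; 46; 61];
 [:: 15; 29; 44; 62];
 [:: 15; 30; 45; 60];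
 [:: 64; 15; 31];
 [:: 64; 47; 63];
 [:: 65; 15; 47];
 [:: 65; 31; 63];
 [:: 66; 15; 63];
 [:: 66; 31; 47];
 [:: 16; 17; 18; 19];
 [:: 67; 16; 20];
 [:: 67; 24; 28];
 [:: 68; 16; 24];
 [:: 68; 20; 28];
 [:: 69; 16; 28];
 [:: 69; 20; 24];
 [:: 16; 21; 26; 31];
 [:: 16; 22; 27; 29];
 [:: 16; 23; 25; 30];
 [:: 17; 20; 27; 30];
 [:: 67; 17; 21];
 [:: 67; 25; 29];
 [:: 68; 17; 25];
 [:: 68; 21; 29];
 [:: 69; 17; 29];
 [:: 69; 21; 25];
 [:: 17; 22; 24; 31];
 [:: 17; 23; 26; 28];
 [:: 18; 20; 25; 31];
 [:: 18; 21; 27; 28];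
 [:: 67; 18; 22];
 [:: 67; 26; 30];
 [:: 68; 18; 26];
 [:: 68; 22; 30];
 [:: 69; 18; 30];
 [:: 69; 22; 26];
 [:: 18; 23; 24; 29];
 [:: 19; 20; 26; 29];
 [:: 19; 21; 24; 30];
 [:: 19; 22; 25; 28];
 [:: 67; 19; 23];
 [:: 67; 27; 31];
 [:: 68; 19; 27];
 [:: 68; 23; 31];
 [:: 69; 19; 31];
 [:: 69; 23; 27];
 [:: 20; 21; 22; 23];
 [:: 24; 25; 26; 27];
 [:: 28; 29; 30; 31];
 [:: 32; 33; 34; 35];
 [:: 67; 32; 36];
 [:: 67; 40; 44];
 [:: 68; 32; 40];
 [:: 68; 36; 44];
 [:: 69; 32; 44];
 [:: 69; 36; 40];
 [:: 32; 37; 42; 47];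
 [:: 32; 38; 43; 45];
 [:: 32; 39; 41; 46];
 [:: 33; 36; 43; 46];
 [:: 67; 33; 37];
 [:: 67; 41; 45];
 [:: 68; 33; 41];
 [:: 68; 37; 45];
 [:: 69; 33; 45];
 [:: 69; 37; 41];
 [:: 33; 38; 40; 47];
 [:: 33; 39; 42; 44];
 [:: 34; 36; 41; 47];
 [:: 34; 37; 43; 44];
 [:: 67; 34; 38];
 [:: 67; 42; 46];
 [:: 68; 34; 42];
 [:: 68; 38; 46];
 [:: 69; 34; 46];
 [:: 69; 38; 42];
 [:: 34; 39; 40; 45];
 [:: 35; 36; 42; 45];
 [:: 35; 37; 40; 46];
 [:: 35; 38; 41; 44];
 [:: 67; 35; 39];
 [:: 67; 43; 47];
 [:: 68; 35; 43];
 [:: 68; 39; 47];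
 [:: 69; 35; 47];
 [:: 69; 39; 43];
 [:: 36; 37; 38; 39];
 [:: 40; 41; 42; 43];
 [:: 44; 45; 46; 47];
 [:: 48; 49; 50; 51];
 [:: 67; 48; 52];
 [:: 67; 56; 60];
 [:: 68; 48; 56];
 [:: 68; 52; 60];
 [:: 69; 48; 60];
 [:: 69; 52; 56];
 [:: 48; 53; 58; 63];
 [:: 48; 54; 59; 61];
 [:: 48; 55; 57; 62];
 [:: 49; 52; 59; 62];
 [:: 67; 49; 53];
 [:: 67; 57; 61];
 [:: 68; 49; 57];
 [:: 68; 53; 61];
 [:: 69; 49; 61];
 [:: 69; 53; 57];
 [:: 49; 54; 56; 63];
 [:: 49; 55; 58; 60];
 [:: 50; 52; 57; 63];
 [:: 50; 53; 59; 60];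
 [:: 67; 50; 54];
 [:: 67; 58; 62];
 [:: 68; 50; 58];
 [:: 68; 54; 62];
 [:: 69; 50; 62];
 [:: 69; 54; 58];
 [:: 50; 55; 56; 61];
 [:: 51; 52; 58; 61];
 [:: 51; 53; 56; 62];
 [:: 51; 54; 57; 60];
 [:: 67; 51; 55];
 [:: 67; 59; 63];
 [:: 68; 51; 59];
 [:: 68; 55; 63];
 [:: 69; 51; 63];
 [:: 69; 55; 59];
 [:: 52; 53; 54; 55];
 [:: 56; 57; 58; 59];
 [:: 60; 61; 62; 63];
 [:: 64; 65; 66];
 [:: 67; 68; 69];
 [:: 70; 71; 72];
 [:: 73; 74; 75];
 [:: 64; 67; 70; 73];
 [:: 64; 68; 71; 75];
 [:: 64; 69; 72; 74];
 [:: 65; 67; 71; 74];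
 [:: 65; 68; 72; 73];
 [:: 65; 69; 70; 75];
 [:: 66; 67; 72; 75];
 [:: 66; 68; 70; 74];
 [:: 66; 69; 71; 73]].
Definition flats76 : seq (seq nat) := [:: [:: 0; 6; 11; 13; 17; 23; 26; 28; 34; 36; 41; 47; 51; 53; 56; 62];
 [:: 3; 6; 9; 12; 17; 20; 27; 30; 32; 37; 42; 47; 50; 55; 56; 61; 73; 74; 75];
 [:: 0; 5; 10; 15; 18; 23; 24; 29; 35; 38; 41; 44; 49; 52; 59; 62; 73; 74; 75];
 [:: 2; 4; 9; 15; 18; 20; 25; 31; 34; 36; 41; 47; 50; 52; 57; 63; 64; 65; 66];
 [:: 2; 6; 10; 14; 17; 21; 25; 29; 35; 39; 43; 47; 48; 52; 56; 60; 67; 68; 69];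
 [:: 0; 4; 8; 12; 18; 22; 26; 30; 35; 39; 43; 47; 49; 53; 57; 61; 67; 68; 69];
 [:: 2; 5; 11; 12; 19; 20; 26; 29; 32; 39; 41; 46; 49; 54; 56; 63; 73; 74; 75];
 [:: 0; 7; 9; 14; 16; 23; 25; 30; 32; 39; 41; 46; 48; 55; 57; 62; 64; 65; 66];
 [:: 0; 4; 8; 12; 19; 23; 27; 31; 33; 37; 41; 45; 50; 54; 58; 62; 67; 68; 69];
 [:: 8; 9; 10; 11; 24; 25; 26; 27; 40; 41; 42; 43; 56; 57; 58; 59; 64; 65; 66];
 [:: 3; 6; 9; 12; 16; 21; 26; 31; 34; 39; 40; 45; 49; 52; 59; 62];
 [:: 32; 33; 34; 35; 36; 37; 38; 39; 40; 41; 42; 43; 44; 45; 46; 47; 67; 68; 69];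
 [:: 1; 7; 10; 12; 18; 20; 25; 31; 32; 38; 43; 45; 51; 53; 56; 62; 73; 74; 75];
 [:: 1; 4; 11; 14; 16; 21; 26; 31; 35; 38; 41; 44; 50; 55; 56; 61; 70; 71; 72];
 [:: 48; 49; 50; 51; 52; 53; 54; 55; 56; 57; 58; 59; 60; 61; 62; 63; 67; 68; 69];
 [:: 2; 6; 10; 14; 18; 22; 26; 30; 34; 38; 42; 46; 50; 54; 58; 62; 64; 65; 66; 67; 68; 69; 70; 71; 72; 73; 74; 75];
 [:: 3; 6; 9; 12; 18; 23; 24; 29; 33; 36; 43; 46; 48; 53; 58; 63; 70; 71; 72];
 [:: 3; 7; 11; 15; 16; 20; 24; 28; 34; 38; 42; 46; 49; 53; 57; 61; 67; 68; 69];
 [:: 2; 7; 8; 13; 19; 22; 25; 28; 32; 37; 42; 47; 49; 52; 59; 62; 70; 71; 72];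
 [:: 0; 4; 8; 12; 17; 21; 25; 29; 34; 38; 42; 46; 51; 55; 59; 63; 67; 68; 69];
 [:: 0; 5; 10; 15; 17; 20; 27; 30; 34; 39; 40; 45; 51; 54; 57; 60; 70; 71; 72];
 [:: 3; 7; 11; 15; 18; 22; 26; 30; 33; 37; 41; 45; 48; 52; 56; 60; 67; 68; 69];
 [:: 1; 7; 10; 12; 17; 23; 26; 28; 33; 39; 42; 44; 49; 55; 58; 60; 64; 65; 66];
 [:: 3; 4; 10; 13; 19; 20; 26; 29; 35; 36; 42; 45; 51; 52; 58; 61; 64; 65; 66];
 [:: 1; 6; 8; 15; 19; 20; 26; 29; 34; 37; 43; 44; 48; 55; 57; 62];
 [:: 1; 6; 8; 15; 17; 22; 24; 31; 33; 38; 40; 47; 49; 54; 56; 63; 64; 65; 66];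
 [:: 0; 7; 9; 14; 18; 21; 27; 28; 35; 36; 42; 45; 49; 54; 56; 63];
 [:: 3; 5; 8; 14; 18; 20; 25; 31; 33; 39; 42; 44; 48; 54; 59; 61];
 [:: 8; 9; 10; 11; 16; 17; 18; 19; 36; 37; 38; 39; 60; 61; 62; 63; 73; 74; 75];
 [:: 4; 5; 6; 7; 20; 21; 22; 23; 36; 37; 38; 39; 52; 53; 54; 55; 64; 65; 66];
 [:: 0; 6; 11; 13; 19; 21; 24; 30; 33; 39; 42; 44; 50; 52; 57; 63; 73; 74; 75];
 [:: 0; 1; 2; 3; 24; 25; 26; 27; 44; 45; 46; 47; 52; 53; 54; 55; 73; 74; 75];
 [:: 0; 1; 2; 3; 28; 29; 30; 31; 36; 37; 38; 39; 56; 57; 58; 59];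
 [:: 12; 13; 14; 15; 20; 21; 22; 23; 32; 33; 34; 35; 56; 57; 58; 59; 73; 74; 75];
 [:: 2; 7; 8; 13; 18; 23; 24; 29; 34; 39; 40; 45; 50; 55; 56; 61; 64; 65; 66];
 [:: 0; 1; 2; 3];
 [:: 4; 5; 6; 7; 16; 17; 18; 19; 44; 45; 46; 47; 56; 57; 58; 59; 70; 71; 72];
 [:: 1; 6; 8; 15; 16; 23; 25; 30; 35; 36; 42; 45; 50; 53; 59; 60; 73; 74; 75];
 [:: 0; 6; 11; 13; 16; 22; 27; 29; 32; 38; 43; 45; 48; 54; 59; 61; 64; 65; 66];
 [:: 2; 7; 8; 13; 16; 21; 26; 31; 33; 36; 43; 46; 51; 54; 57; 60; 73; 74; 75];
 [:: 3; 5; 8; 14; 17; 23; 26; 28; 32; 38; 43; 45; 50; 52; 57; 63; 70; 71; 72];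
 [:: 1; 5; 9; 13; 16; 20; 24; 28; 35; 39; 43; 47; 50; 54; 58; 62; 67; 68; 69];
 [:: 3; 5; 8; 14; 19; 21; 24; 30; 35; 37; 40; 46; 51; 53; 56; 62; 64; 65; 66];
 [:: 4; 5; 6; 7; 28; 29; 30; 31; 40; 41; 42; 43; 48; 49; 50; 51; 73; 74; 75];
 [:: 2; 5; 11; 12; 16; 23; 25; 30; 33; 38; 40; 47; 51; 52; 58; 61];
 [:: 3; 4; 10; 13; 17; 22; 24; 31; 32; 39; 41; 46; 50; 53; 59; 60];
 [:: 2; 6; 10; 14; 16; 20; 24; 28; 33; 37; 41; 45; 51; 55; 59; 63; 67; 68; 69];
 [:: 0; 1; 2; 3; 4; 5; 6; 7; 8; 9; 10; 11; 12; 13; 14; 15; 67; 68; 69];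
 [:: 12; 13; 14; 15; 16; 17; 18; 19; 40; 41; 42; 43; 52; 53; 54; 55];
 [:: 0; 7; 9; 14; 19; 20; 26; 29; 33; 38; 40; 47; 50; 53; 59; 60; 70; 71; 72];
 [:: 4; 5; 6; 7; 24; 25; 26; 27; 32; 33; 34; 35; 60; 61; 62; 63];
 [:: 1; 7; 10; 12; 16; 22; 27; 29; 35; 37; 40; 46; 50; 52; 57; 63];
 [:: 1; 5; 9; 13; 18; 22; 26; 30; 32; 36; 40; 44; 51; 55; 59; 63; 67; 68; 69];
 [:: 12; 13; 14; 15; 28; 29; 30; 31; 44; 45; 46; 47; 60; 61; 62; 63; 64; 65; 66];
 [:: 1; 4; 11; 14; 17; 20; 27; 30; 33; 36; 43; 46; 49; 52; 59; 62; 64; 65; 66];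
 [:: 0; 4; 8; 12; 16; 20; 24; 28; 32; 36; 40; 44; 48; 52; 56; 60; 64; 65; 66; 67; 68; 69; 70; 71; 72; 73; 74; 75];
 [:: 1; 4; 11; 14; 18; 23; 24; 29; 32; 37; 42; 47; 51; 54; 57; 60];
 [:: 2; 4; 9; 15; 16; 22; 27; 29; 33; 39; 42; 44; 51; 53; 56; 62; 70; 71; 72];
 [:: 2; 4; 9; 15; 17; 23; 26; 28; 35; 37; 40; 46; 48; 54; 59; 61; 73; 74; 75];
 [:: 2; 6; 10; 14; 19; 23; 27; 31; 32; 36; 40; 44; 49; 53; 57; 61; 67; 68; 69];
 [:: 12; 13; 14; 15; 24; 25; 26; 27; 36; 37; 38; 39; 48; 49; 50; 51; 70; 71; 72];
 [:: 1; 4; 11; 14; 19; 22; 25; 28; 34; 39; 40; 45; 48; 53; 58; 63; 73; 74; 75];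
 [:: 0; 1; 2; 3; 20; 21; 22; 23; 40; 41; 42; 43; 60; 61; 62; 63; 70; 71; 72];
 [:: 8; 9; 10; 11; 28; 29; 30; 31; 32; 33; 34; 35; 52; 53; 54; 55; 70; 71; 72];
 [:: 0; 7; 9; 14; 17; 22; 24; 31; 34; 37; 43; 44; 51; 52; 58; 61; 73; 74; 75];
 [:: 1; 5; 9; 13; 17; 21; 25; 29; 33; 37; 41; 45; 49; 53; 57; 61; 64; 65; 66; 67; 68; 69; 70; 71; 72; 73; 74; 75];
 [:: 3; 4; 10; 13; 18; 21; 27; 28; 33; 38; 40; 47; 48; 55; 57; 62; 73; 74; 75];
 [:: 3; 5; 8; 14; 16; 22; 27; 29; 34; 36; 41; 47; 49; 55; 58; 60; 73; 74; 75];
 [:: 0; 5; 10; 15; 16; 21; 26; 31; 32; 37; 42; 47; 48; 53; 58; 63; 64; 65; 66];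
 [:: 2; 5; 11; 12; 18; 21; 27; 28; 34; 37; 43; 44; 50; 53; 59; 60; 64; 65; 66];
 [:: 3; 4; 10; 13; 16; 23; 25; 30; 34; 37; 43; 44; 49; 54; 56; 63; 70; 71; 72];
 [:: 3; 6; 9; 12; 19; 22; 25; 28; 35; 38; 41; 44; 51; 54; 57; 60; 64; 65; 66];
 [:: 8; 9; 10; 11; 20; 21; 22; 23; 44; 45; 46; 47; 48; 49; 50; 51];
 [:: 2; 7; 8; 13; 17; 20; 27; 30; 35; 38; 41; 44; 48; 53; 58; 63];
 [:: 0; 6; 11; 13; 18; 20; 25; 31; 35; 37; 40; 46; 49; 55; 58; 60; 70; 71; 72];
 [:: 3; 7; 11; 15; 17; 21; 25; 29; 32; 36; 40; 44; 50; 54; 58; 62; 67; 68; 69];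
 [:: 16; 17; 18; 19; 20; 21; 22; 23; 24; 25; 26; 27; 28; 29; 30; 31; 67; 68; 69];
 [:: 0; 5; 10; 15; 19; 22; 25; 28; 33; 36; 43; 46; 50; 55; 56; 61];
 [:: 1; 7; 10; 12; 19; 21; 24; 30; 34; 36; 41; 47; 48; 54; 59; 61; 70; 71; 72];
 [:: 3; 7; 11; 15; 19; 23; 27; 31; 35; 39; 43; 47; 51; 55; 59; 63; 64; 65; 66; 67; 68; 69; 70; 71; 72; 73; 74; 75];
 [:: 1; 5; 9; 13; 19; 23; 27; 31; 34; 38; 42; 46; 48; 52; 56; 60; 67; 68; 69];
 [:: 1; 6; 8; 15; 18; 21; 27; 28; 32; 39; 41; 46; 51; 52; 58; 61; 70; 71; 72];
 [:: 2; 4; 9; 15; 19; 21; 24; 30; 32; 38; 43; 45; 49; 55; 58; 60];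
 [:: 2; 5; 11; 12; 17; 22; 24; 31; 35; 36; 42; 45; 48; 55; 57; 62; 70; 71; 72];
 [:: 0; 1; 2; 3; 16; 17; 18; 19; 32; 33; 34; 35; 48; 49; 50; 51; 64; 65; 66]].

(* In each case the listed 4-set spans after three closure steps. *)
Theorem proposition3p6 :
  forall v : nat, v \in [:: 58; 66; 67; 76] ->
    exists B : {set {set 'I_v}}, is_PBD K34 B /\ has_dimension B 3.
Proof.
move=> v; rewrite !inE => /or4P[] /eqP ->.
- by apply: (@certificate_sound 58 blocks58 flats58 [:: 7; 17; 11; 43] 3); vm_compute.
- by apply: (@certificate_sound 66 blocks66 flats66 [:: 44; 62; 32; 7] 3); vm_compute.
- by apply: (@certificate_sound 67 blocks67 flats67 [:: 61; 36; 18; 27] 3); vm_compute.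
- by apply: (@certificate_sound 76 blocks76 flats76 [:: 35; 3; 14; 26] 3); vm_compute.
Qed.
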